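(* Let $K\subset\mathbb{R}^n$ be a proper cone and let $\mathcal{S}=\bigcup_{t}\mathcal{S}_t\subset\pi(K)$ be a $K$-irreducible semigroup generated in one of the three ways (discrete, continuous, or switched with jumps) described in the context. If $\rho(\mathcal{S})=1$, then $\mathcal{S}$ is bounded as a subset of $\mathbb{R}^{n\times n}$.
   Context: A proper cone $K\subset\mathbb{R}^n$ is a nonempty set with $rK\subset K$ for all $r>0$ which is convex, pointed, closed and has nonempty interior. Write $x\ge_K y$ if $x-y\in K$. A face of $K$ is a cone $F\subseteq K$ with: $x\in F$, $x\ge_K y\ge_K0$ imply $y\in F$; $\{0\},K$ are trivial faces. $\pi(K)=\{A: AK\subset K\}$; $A\in\pi(K)$ is $K$-irreducible if no nontrivial face $F$ has $AF\subset F$. Semigroups: (A) discrete: for compact $\mathcal{M}\subset\mathbb{R}^{n\times n}$, $\mathcal{S}_0=\{I\}$, $\mathcal{S}_t=\{A_{t-1}\cdots A_0:A_s\in\mathcal{M}\}$, $t\in\mathbb{N}$. (B) continuous: for compact $\mathcal{M}$, $\mathcal{S}_0=\{I\}$, $\mathcal{S}_t=\{\Phi_\sigma(t)\}$ over measurable $\sigma:[0,t]\to\mathcal{M}$, where $\dot\Phi_\sigma=\sigma\Phi_\sigma$, $\Phi_\sigma(0)=I$. (C) with jumps: for compact $\mathcal{M}\subset\mathbb{R}^{n\times n}\times\mathbb{R}^{n\times n}$ of pairs $(A,\Pi)$ with $\Pi^2=\Pi$, $A\Pi=\Pi A$, and piecewise constant right-continuous $\sigma:\mathbb{R}_+\to\mathcal{M}$,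 $\sigma(s)=(A_{\sigma(s)},\Pi_{\sigma(s)})$, with switching times $0=t_0<t_1<\dots$, $t_k\to\infty$, for $t\in[t_k,t_{k+1})$ set $\Phi_\sigma(t)=e^{A_{\sigma(t_k)}(t-t_k)}\Pi_{\sigma(t_k)}e^{A_{\sigma(t_{k-1})}(t_k-t_{k-1})}\Pi_{\sigma(t_{k-1})}\cdots e^{A_{\sigma(t_0)}(t_1-t_0)}\Pi_{\sigma(t_0)}$, and $\mathcal{S}_t$ is the set of all such $\Phi_\sigma(t)$. In each case $\mathcal{S}=\bigcup_t\mathcal{S}_t$. Joint spectral radius: $\rho(\mathcal{S})=\lim_{t\to\infty}\sup\{\|S\|:S\in\mathcal{S}_t\}^{1/t}$. The semigroup $\mathcal{S}\subset\pi(K)$ is $K$-irreducible if there exists $t>0$ such that $\operatorname{conv}\mathcal{S}_t$ contains a $K$-irreducible element. *)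

From Stdlib Require Import Reals Lra Lia ClassicalEpsilon.
Open Scope R_scope.

(* Vectors of R^n and matrices of R^{n x n} are represented by functions
   nat -> R and nat -> nat -> R; the "canonical" representatives are those
   vanishing outside the index range [0,n).  All operations below produce
   canonical representatives from arbitrary inputs. *)
Definition Vec := nat -> R.
Definition Mat := nat -> nat -> R.

Definition isVec (n : nat) (x : Vec) : Prop := forall i, (n <= i)%nat -> x i = 0.
Definition isMat (n : nat) (A : Mat) : Prop :=
  forall i j, (n <= i)%nat \/ (n <= j)%nat -> A i j = 0.

Fixpoint fsum (m : nat) (f : nat -> R) : R :=
  match m with O => 0 | S k => fsum k f + f k end.

Definition vzero : Vec := fun _ => 0.
Definition vadd (x y : Vec) : Vec := fun i => x i + y i.
Definition vscale (r : R) (x : Vec) : Vec := fun i => r * x i.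
Definition vopp (x : Vec) : Vec := fun i => - x i.
Definition vsub (x y : Vec) : Vec := fun i => x i - y i.

Definition mid (n : nat) : Mat :=
  fun i j => if andb (Nat.ltb i n) (Nat.eqb i j) then 1 else 0.
Definition mmul (n : nat) (A B : Mat) : Mat :=
  fun i j => if andb (Nat.ltb i n) (Nat.ltb j n)
             then fsum n (fun k => A i k * B k j) else 0.
Definition mvec (n : nat) (A : Mat) (x : Vec) : Vec :=
  fun i => if Nat.ltb i n then fsum n (fun k => A i k * x k) else 0.
Definition mscale (n : nat) (r : R) (A : Mat) : Mat :=
  fun i j => if andb (Nat.ltb i n) (Nat.ltb j n) then r * A i j else 0.
Fixpoint mpow (n : nat) (A : Mat) (k : nat) : Mat :=
  match k with O => mid n | S k' => mmul n A (mpow n A k') end.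

(* entrywise l1 norm on R^{n x n} (all norms are equivalent) *)
Definition mnorm (n : nat) (A : Mat) : R :=
  fsum n (fun i => fsum n (fun j => Rabs (A i j))).

Definition Rlim (u : nat -> R) : R :=
  epsilon (inhabits 0) (fun l => Un_cv u l).

Definition mexp (n : nat) (A : Mat) : Mat :=
  fun i j => Rlim (fun N => fsum (S N) (fun k => / INR (Factorial.fact k) * mpow n A k i j)).

Definition convex_set (C : Vec -> Prop) : Prop :=
  forall x y l, C x -> C y -> 0 <= l <= 1 ->
    C (vadd (vscale l x) (vscale (1 - l) y)).

Definition proper_cone (n : nat) (K : Vec -> Prop) : Prop :=
  (forall x, K x -> isVec n x) /\
  (exists x, K x) /\
  (forall x r, K x -> 0 < r -> K (vscale r x)) /\
  convex_set K /\
  (forall x, K x -> K (vopp x) -> x = vzero) /\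
  (forall (u : nat -> Vec) (x : Vec), (forall k, K (u k)) -> isVec n x ->
     (forall i, (i < n)%nat -> Un_cv (fun k => u k i) (x i)) -> K x) /\
  (exists x eps, K x /\ 0 < eps /\
     forall y, isVec n y -> (forall i, (i < n)%nat -> Rabs (y i - x i) < eps) -> K y).

Definition Kge (K : Vec -> Prop) (x y : Vec) : Prop := K (vsub x y).

Definition face (K F : Vec -> Prop) : Prop :=
  (exists x, F x) /\
  (forall x r, F x -> 0 < r -> F (vscale r x)) /\
  convex_set F /\
  (forall x, F x -> K x) /\
  (forall x y, F x -> Kge K x y -> Kge K y vzero -> F y).

Definition trivial_face (K F : Vec -> Prop) : Prop :=
  (forall x, F x <-> x = vzero) \/ (forall x, F x <-> K x).

Definition in_pi (n : nat) (K : Vec -> Prop) (A : Mat) : Prop :=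
  forall x, K x -> K (mvec n A x).

Definition K_irreducible (n : nat) (K : Vec -> Prop) (A : Mat) : Prop :=
  in_pi n K A /\
  forall F, face K F -> (forall x, F x -> F (mvec n A x)) -> trivial_face K F.

Definition compact_mset (n : nat) (M : Mat -> Prop) : Prop :=
  (forall A, M A -> isMat n A) /\
  (exists C, forall A, M A -> mnorm n A <= C) /\
  (forall (u : nat -> Mat) (L : Mat), (forall k, M (u k)) -> isMat n L ->
     (forall i j, (i < n)%nat -> (j < n)%nat -> Un_cv (fun k => u k i j) (L i j)) ->
     M L).

Definition compact_pairs (n : nat) (M : Mat -> Mat -> Prop) : Prop :=
  (forall A P, M A P -> isMat n A /\ isMat n P) /\
  (exists C, forall A P, M A P -> mnorm n A <= C /\ mnorm n P <= C) /\
  (forall (u v : nat -> Mat) (L1 L2 : Mat), (forall k, M (u k) (v k)) ->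
     isMat n L1 -> isMat n L2 ->
     (forall i j, (i < n)%nat -> (j < n)%nat ->
        Un_cv (fun k => u k i j) (L1 i j) /\ Un_cv (fun k => v k i j) (L2 i j)) ->
     M L1 L2).

Fixpoint disc_S (n : nat) (M : Mat -> Prop) (t : nat) (B : Mat) : Prop :=
  match t with
  | O => B = mid n
  | S t' => exists A C, M A /\ disc_S n M t' C /\ B = mmul n A C
  end.

(* outer_le A r  :<->  Lebesgue outer measure of A is <= r *)
Definition outer_le (A : R -> Prop) (r : R) : Prop :=
  forall eps, 0 < eps -> exists a b : nat -> R,
    (forall k, a k <= b k) /\
    (forall x, A x -> exists k, a k <= x <= b k) /\
    (forall m, fsum m (fun k => b k - a k) <= r + eps).

Definition null_set (N : R -> Prop) : Prop := outer_le N 0.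

Definition leb_measurable (E : R -> Prop) : Prop :=
  forall (A : R -> Prop) r, outer_le A r ->
    exists r1 r2, outer_le (fun x => A x /\ E x) r1 /\
                  outer_le (fun x => A x /\ ~ E x) r2 /\ r1 + r2 <= r.

Definition measurable_on (n : nat) (t : R) (sigma : R -> Mat) : Prop :=
  forall i j c, (i < n)%nat -> (j < n)%nat ->
    leb_measurable (fun s => 0 <= s <= t /\ sigma s i j < c).

Definition abs_cont_on (t : R) (f : R -> R) : Prop :=
  forall eps, 0 < eps -> exists delta, 0 < delta /\
    forall (m : nat) (a b : nat -> R),
      (forall k, (k < m)%nat -> 0 <= a k <= b k /\ b k <= t) ->
      (forall k, (S k < m)%nat -> b k <= a (S k)) ->
      fsum m (fun k => b k - a k) < delta ->
      fsum m (fun k => Rabs (f (b k) - f (a k))) < eps.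

(* Phi is the (Caratheodory) solution of dPhi/ds = sigma Phi, Phi(0) = I on [0,t]:
   absolutely continuous, with derivative sigma(s) Phi(s) at almost every s. *)
Definition cont_S (n : nat) (M : Mat -> Prop) (t : R) (B : Mat) : Prop :=
  exists (sigma Phi : R -> Mat),
    (forall s, 0 <= s <= t -> M (sigma s)) /\
    measurable_on n t sigma /\
    (forall s, isMat n (Phi s)) /\
    Phi 0 = mid n /\
    (forall i j, (i < n)%nat -> (j < n)%nat -> abs_cont_on t (fun s => Phi s i j)) /\
    (exists N, null_set N /\
       forall s, 0 <= s <= t -> ~ N s ->
         forall i j, (i < n)%nat -> (j < n)%nat ->
           derivable_pt_lim (fun u => Phi u i j) s (mmul n (sigma s) (Phi s) i j)) /\
    B = Phi t.

Fixpoint jprod (n : nat) (tk : nat -> R) (Am Pm : nat -> Mat) (k : nat) : Mat :=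
  match k with
  | O => mid n
  | S l => mmul n (mmul n (mexp n (mscale n (tk (S l) - tk l) (Am l))) (Pm l))
                  (jprod n tk Am Pm l)
  end.

Definition jump_S (n : nat) (M : Mat -> Mat -> Prop) (t : R) (B : Mat) : Prop :=
  (t = 0 /\ B = mid n) \/
  (0 < t /\ exists (tk : nat -> R) (Am Pm : nat -> Mat) (k : nat),
     tk O = 0 /\ (forall l, tk l < tk (S l)) /\ (forall T, exists l, T < tk l) /\
     (forall l, M (Am l) (Pm l)) /\
     tk k <= t < tk (S k) /\
     B = mmul n (mmul n (mexp n (mscale n (t - tk k) (Am k))) (Pm k))
                (jprod n tk Am Pm k)).

(* ---------- generated semigroups ----------
   A semigroup is given by its set of times Tm (N or [0,oo)) and the family
   S t (= S_t) for t in Tm. *)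
Definition generated_semigroup (n : nat) (Tm : R -> Prop) (S : R -> Mat -> Prop) : Prop :=
  (exists M, compact_mset n M /\
     (forall t, Tm t <-> exists k : nat, t = INR k) /\
     (forall t B, S t B <-> exists k : nat, t = INR k /\ disc_S n M k B))
  \/
  (exists M, compact_mset n M /\
     (forall t, Tm t <-> 0 <= t) /\
     (forall t B, S t B <-> 0 <= t /\ cont_S n M t B))
  \/
  (exists M, compact_pairs n M /\
     (forall A P, M A P -> mmul n P P = P /\ mmul n A P = mmul n P A) /\
     (forall t, Tm t <-> 0 <= t) /\
     (forall t B, S t B <-> 0 <= t /\ jump_S n M t B)).

(* x^(1/t) for x >= 0 (with 0^(1/t) = 0) *)
Definition rootp (x t : R) : R := if Rle_dec x 0 then 0 else Rpower x (/ t).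

Definition jsr_eq (n : nat) (Tm : R -> Prop) (S : R -> Mat -> Prop) (r : R) : Prop :=
  exists s : R -> R,
    (forall t, Tm t -> is_lub (fun x => exists B, S t B /\ x = mnorm n B) (s t)) /\
    (forall eps, 0 < eps -> exists T, forall t, Tm t -> T <= t ->
       Rabs (rootp (s t) t - r) < eps).

Definition K_irreducible_sg (n : nat) (K : Vec -> Prop) (Tm : R -> Prop)
    (S : R -> Mat -> Prop) : Prop :=
  exists t, Tm t /\ 0 < t /\
    exists (m : nat) (w : nat -> R) (Bs : nat -> Mat),
      (forall k, (k < m)%nat -> 0 <= w k /\ S t (Bs k)) /\
      fsum m w = 1 /\
      K_irreducible n K (fun i j => fsum m (fun k => w k * Bs k i j)).

Definition sg_bounded (n : nat) (Tm : R -> Prop) (S : R -> Mat -> Prop) : Prop :=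
  exists C, forall t B, Tm t -> S t B -> mnorm n B <= C.

(* Fix an interior point x0 of K with a ball of radius eps
   around it inside K.  Since rho(S) = 1, for every a > 0 the matrices of
   S_t satisfy ||B|| <= e^{a t} for all large t.  For such a and a
   threshold T1 consider the gauge
       g(x) = inf { c >= 0 | c e^{a t} x0 >=_K B x  for all t >= T1, B in S_t },
   a monotone, sublinear functional on K with g(B x) <= e^{a s} g(x) for
   B in S_s (this uses that S_s S_t lies in the closure of S_{s+t}).  If the
   ratio g(y) / g(x0) could become arbitrarily small on the unit sphere of
   K as a -> 0, the vectors on which it tends to zero would form a nonzero
   face of K, different from K and invariant under the irreducible convex
   combination of elements of S_{T0}: a contradiction.  The resulting
   uniform lower bound c g(x0) <= g(y) gives c ||B x|| <= e^{a t} ||x||/eps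
   for all a, hence ||B x|| <= ||x|| / (c eps), and boundedness follows. *)

From Stdlib Require Import Reals Lra Lia ZArith ClassicalEpsilon Classical
  FunctionalExtensionality.
Open Scope R_scope.

Lemma fsum_ext m f g : (forall k, (k < m)%nat -> f k = g k) -> fsum m f = fsum m g.
Proof.
  induction m; simpl; intros H; auto.
  rewrite IHm by (intros; apply H; lia). rewrite H by lia; auto.
Qed.

Lemma fsum_plus m f g : fsum m (fun k => f k + g k) = fsum m f + fsum m g.
Proof. induction m; simpl; [lra | rewrite IHm; lra]. Qed.

Lemma fsum_scal m c f : fsum m (fun k => c * f k) = c * fsum m f.
Proof. induction m; simpl; [lra | rewrite IHm; lra]. Qed.

Lemma fsum_minus m f g : fsum m (fun k => f k - g k) = fsum m f - fsum m g.
Proof. induction m; simpl; [lra | rewrite IHm; lra]. Qed.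

Lemma fsum_zero m : fsum m (fun _ => 0) = 0.
Proof. induction m; simpl; [lra | rewrite IHm; lra]. Qed.

Lemma fsum_const m c : fsum m (fun _ => c) = INR m * c.
Proof. induction m; simpl fsum. simpl; lra. rewrite IHm, S_INR. lra. Qed.

Lemma fsum_le m f g : (forall k, (k < m)%nat -> f k <= g k) -> fsum m f <= fsum m g.
Proof.
  induction m; simpl; intros H; [lra |].
  assert (f m <= g m) by (apply H; lia).
  assert (fsum m f <= fsum m g) by (apply IHm; intros; apply H; lia). lra.
Qed.

Lemma fsum_nonneg m f : (forall k, (k < m)%nat -> 0 <= f k) -> 0 <= fsum m f.
Proof. intros H. rewrite <- (fsum_zero m). apply fsum_le; auto. Qed.

Lemma fsum_abs m f : Rabs (fsum m f) <= fsum m (fun k => Rabs (f k)).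
Proof.
  induction m; simpl. rewrite Rabs_R0; lra.
  eapply Rle_trans. apply Rabs_triang. lra.
Qed.

Lemma fsum_swap m p f :
  fsum m (fun i => fsum p (fun j => f i j)) = fsum p (fun j => fsum m (fun i => f i j)).
Proof. induction m; simpl. rewrite fsum_zero; auto. rewrite IHm, <- fsum_plus; auto. Qed.

Lemma fsum_term m f k : (forall k, (k < m)%nat -> 0 <= f k) -> (k < m)%nat -> f k <= fsum m f.
Proof.
  induction m; intros H Hk. lia. simpl.
  destruct (Nat.eq_dec k m).
  - subst. assert (0 <= fsum m f) by (apply fsum_nonneg; intros; apply H; lia). lra.
  - assert (f k <= fsum m f) by (apply IHm; [intros; apply H; lia | lia]).
    assert (0 <= f m) by (apply H; lia). lra.
Qed.

Lemma fsum_mono m m' f : (forall k, (k < m')%nat -> 0 <= f k) -> (m <= m')%nat -> fsum m f <= fsum m' f.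
Proof.
  intros H Hm. induction Hm. lra. simpl.
  assert (0 <= f m0) by (apply H; lia).
  assert (fsum m f <= fsum m0 f) by (apply IHHm; intros; apply H; lia). lra.
Qed.

Lemma fsum_delta m i f :
  fsum m (fun k => if Nat.eqb i k then f k else 0) = if Nat.ltb i m then f i else 0.
Proof.
  induction m; simpl; auto. rewrite IHm.
  destruct (Nat.eqb_spec i m); destruct (Nat.ltb_spec i m); destruct (Nat.ltb_spec i (S m));
    try lia; subst; lra.
Qed.

Lemma fsum_S_sum N f : fsum (S N) f = sum_f_R0 f N.
Proof. induction N; simpl. lra. simpl in IHN. rewrite IHN. auto. Qed.

Lemma fsum_shift N f : fsum (S N) f = f 0%nat + fsum N (fun j => f (S j)).
Proof. induction N; simpl. lra. simpl in IHN. rewrite IHN. lra. Qed.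

Lemma Rdiv_nonneg a b : 0 <= a -> 0 < b -> 0 <= a / b.
Proof. intros. unfold Rdiv. apply Rmult_le_pos; auto. left. apply Rinv_0_lt_compat; auto. Qed.

Lemma exp_le_mono x y : x <= y -> exp x <= exp y.
Proof. intros [H | ->]; [left; apply exp_increasing; auto | lra]. Qed.

Lemma Un_cv_const c : Un_cv (fun _ => c) c.
Proof. intros e He. exists 0%nat. intros. unfold Rdist. rewrite Rminus_diag, Rabs_R0; auto. Qed.

Lemma Un_cv_ext u v l : (forall k, u k = v k) -> Un_cv u l -> Un_cv v l.
Proof.
  intros H Hu e He. destruct (Hu e He) as [N HN]. exists N. intros k Hk. rewrite <- H. auto.
Qed.

Lemma fsum_cv m (u : nat -> nat -> R) (l : nat -> R) :
  (forall k, (k < m)%nat -> Un_cv (fun j => u j k) (l k)) ->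
  Un_cv (fun j => fsum m (u j)) (fsum m l).
Proof.
  induction m; intros H; simpl. apply Un_cv_const.
  apply CV_plus. apply IHm; intros; apply H; lia. apply H; lia.
Qed.

Lemma inv_Sn_small e : 0 < e -> exists N, forall k, (N <= k)%nat -> / (INR k + 1) < e.
Proof.
  intros He. pose proof RinvN_cv as Hcv. destruct (Hcv e He) as [N HN]. exists N. intros k Hk.
  specialize (HN k Hk). unfold Rdist in HN. simpl in HN.
  rewrite Rminus_0_r, Rabs_pos_eq in HN; auto.
  left. apply Rinv_0_lt_compat. pose proof (pos_INR k). lra.
Qed.

Lemma Un_cv_squeeze0 u v : (forall k, 0 <= u k <= v k) -> Un_cv v 0 -> Un_cv u 0.
Proof.
  intros H Hv e He. destruct (Hv e He) as [N HN]. exists N. intros k Hk.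
  specialize (HN k Hk). specialize (H k). unfold Rdist in *. rewrite Rminus_0_r in *.
  rewrite Rabs_pos_eq in * by lra. lra.
Qed.

Lemma cv_le_const u l c : Un_cv u l -> (forall N, u N <= c) -> l <= c.
Proof.
  intros H Hc. apply Rnot_lt_le. intros Hlt. destruct (H (l - c) ltac:(lra)) as [N HN].
  specialize (HN N (le_n _)). specialize (Hc N). unfold Rdist in HN. apply Rabs_def2 in HN. lra.
Qed.

Lemma cv_ge u l c N : Un_cv u l -> (forall M, (N <= M)%nat -> c <= u M) -> c <= l.
Proof.
  intros H Hc. apply Rnot_lt_le. intros Hlt. destruct (H (c - l) ltac:(lra)) as [N' HN].
  specialize (HN (max N N') ltac:(lia)). specialize (Hc (max N N') ltac:(lia)).
  unfold Rdist in HN. apply Rabs_def2 in HN. lra.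
Qed.

Lemma choice_nat {A : Type} (P : nat -> A -> Prop) :
  (forall m, exists x, P m x) -> exists f, forall m, P m (f m).
Proof.
  intros H. exists (fun m => proj1_sig (constructive_indefinite_description _ (H m))).
  intros m. destruct (constructive_indefinite_description _ (H m)); auto.
Qed.

Definition incr (phi : nat -> nat) : Prop := forall k, (phi k < phi (S k))%nat.

Lemma incr_ge phi : incr phi -> forall k, (k <= phi k)%nat.
Proof. intros H k; induction k. lia. specialize (H k). lia. Qed.

Lemma incr_mono phi : incr phi -> forall k l, (k <= l)%nat -> (phi k <= phi l)%nat.
Proof. intros H k l Hkl. induction Hkl. lia. specialize (H m). lia. Qed.

Lemma Un_cv_sub u l phi : incr phi -> Un_cv u l -> Un_cv (fun k => u (phi k)) l.
Proof.
  intros Hp H e He. destruct (H e He) as [N HN]. exists N. intros k Hk. apply HN.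
  pose proof (incr_ge phi Hp k). lia.
Qed.

Lemma BW_subseq (u : nat -> R) M : (forall k, Rabs (u k) <= M) ->
  exists phi, incr phi /\ exists l, Un_cv (fun k => u (phi k)) l.
Proof.
  intros HM.
  destruct (Bolzano_Weierstrass u (fun c => -M <= c <= M) (compact_P3 (-M) M)) as [l Hl].
  { intros k. specialize (HM k). pose proof (Rle_abs (u k)). pose proof (Rle_abs (- u k)).
    rewrite Rabs_Ropp in *. lra. }
  assert (Hstep : forall (N : nat) (k : nat),
             exists p, (N <= p)%nat /\ Rabs (u p - l) < / (INR k + 1)).
  { intros N k. assert (Hpos : 0 < / (INR k + 1))
      by (apply Rinv_0_lt_compat; pose proof (pos_INR k); lra).
    destruct (Hl (fun y => Rabs (y - l) < / (INR k + 1)) N) as [p Hp].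
    - exists (mkposreal _ Hpos). intros y Hy. unfold disc in Hy. simpl in Hy. auto.
    - exists p; auto. }
  set (nxt := fun N k => proj1_sig (constructive_indefinite_description _ (Hstep N k))).
  assert (Hnxt : forall N k, (N <= nxt N k)%nat /\ Rabs (u (nxt N k) - l) < / (INR k + 1)).
  { intros N k. unfold nxt. destruct (constructive_indefinite_description _ (Hstep N k)); auto. }
  set (phi := fix f (k : nat) : nat :=
                match k with O => nxt O O | S k' => nxt (S (f k')) k end).
  exists phi. split.
  - intros k. simpl. destruct (Hnxt (S (phi k)) (S k)). lia.
  - exists l. intros e He. destruct (inv_Sn_small e He) as [N HN]. exists N. intros k Hk.
    unfold Rdist. assert (Rabs (u (phi k) - l) < / (INR k + 1)).
    { destruct k; simpl; apply Hnxt. }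
    specialize (HN k Hk). lra.
Qed.

Lemma BW_subseq_vec n (u : nat -> Vec) M : (forall k i, (i < n)%nat -> Rabs (u k i) <= M) ->
  exists phi, incr phi /\ exists y, isVec n y /\
    forall i, (i < n)%nat -> Un_cv (fun k => u (phi k) i) (y i).
Proof.
  intros HM.
  assert (H : forall m, (m <= n)%nat -> exists phi, incr phi /\ exists y,
             forall i, (i < m)%nat -> Un_cv (fun k => u (phi k) i) (y i)).
  { induction m; intros Hm.
    - exists (fun k => k). split. intros k; lia. exists (fun _ => 0). intros; lia.
    - destruct IHm as [phi [Hphi [y Hy]]]. lia.
      destruct (BW_subseq (fun k => u (phi k) m) M) as [psi [Hpsi [l Hl]]].
      { intros k; apply HM; lia. }
      exists (fun k => phi (psi k)). split.
      + intros k. pose proof (incr_mono phi Hphi (S (psi k)) (psi (S k)) (Hpsi k)).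
        specialize (Hphi (psi k)). lia.
      + exists (fun i => if Nat.eqb i m then l else y i). intros i Hi.
        destruct (Nat.eqb_spec i m). subst. auto.
        apply (Un_cv_sub (fun k => u (phi k) i)); auto. apply Hy; lia. }
  destruct (H n (le_n n)) as [phi [Hphi [y Hy]]]. exists phi. split; auto.
  exists (fun i => if Nat.ltb i n then y i else 0). split.
  - intros i Hi. destruct (Nat.ltb_spec i n); auto; lia.
  - intros i Hi. destruct (Nat.ltb_spec i n); try lia. auto.
Qed.

Definition inf_of (P : R -> Prop) : R :=
  epsilon (inhabits 0) (fun m => (forall c, P c -> m <= c) /\
                                  (forall e, 0 < e -> exists c, P c /\ c < m + e)).

Lemma inf_of_spec P : (exists c, P c) -> (forall c, P c -> 0 <= c) ->
  (forall c, P c -> inf_of P <= c) /\ (forall e, 0 < e -> exists c, P c /\ c < inf_of P + e).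
Proof.
  intros [c0 Hc0] Hpos. unfold inf_of. apply epsilon_spec.
  destruct (completeness (fun x => exists c, P c /\ x = - c)) as [m [Hm1 Hm2]].
  { exists 0. intros x [c [Hc ->]]. specialize (Hpos c Hc). lra. }
  { exists (- c0). eauto. }
  exists (- m). split.
  - intros c Hc. assert (- c <= m) by (apply Hm1; eauto). lra.
  - intros e He. apply NNPP. intros Hn.
    assert (Hge : forall c, P c -> - m + e <= c).
    { intros c Hc. apply Rnot_lt_le. intros Hlt. apply Hn. eauto. }
    assert (m <= m - e). { apply Hm2. intros x [c [Hc ->]]. specialize (Hge c Hc). lra. }
    lra.
Qed.

Lemma inf_of_le P c : (forall c, P c -> 0 <= c) -> P c -> inf_of P <= c.
Proof. intros H Hc. apply (inf_of_spec P); eauto. Qed.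

Lemma inf_of_approx P e : (exists c, P c) -> (forall c, P c -> 0 <= c) -> 0 < e ->
  exists c, P c /\ c < inf_of P + e.
Proof. intros H1 H2 He. apply (inf_of_spec P); auto. Qed.

Lemma inf_of_nonneg P : (exists c, P c) -> (forall c, P c -> 0 <= c) -> 0 <= inf_of P.
Proof.
  intros H1 H2. apply Rnot_lt_le. intros Hlt.
  destruct (inf_of_approx P (- inf_of P) H1 H2) as [c [Hc Hc2]]. lra.
  specialize (H2 c Hc). lra.
Qed.

Ltac vec_ext := apply functional_extensionality; intro;
  unfold vadd, vsub, vscale, vopp, vzero; cbn [fsum]; try field; try lra.

Lemma mmul_isMat n A B : isMat n (mmul n A B).
Proof.
  intros i j H. unfold mmul. destruct H as [H | H];
    [destruct (Nat.ltb_spec i n) | destruct (Nat.ltb_spec j n)]; try lia; simpl; auto.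
  destruct (Nat.ltb i n); auto.
Qed.

Lemma mid_isMat n : isMat n (mid n).
Proof.
  intros i j H. unfold mid. destruct (Nat.ltb_spec i n); simpl; auto.
  destruct (Nat.eqb_spec i j); auto. lia.
Qed.

Lemma mmul_assoc n A B C : mmul n (mmul n A B) C = mmul n A (mmul n B C).
Proof.
  apply functional_extensionality; intro i; apply functional_extensionality; intro j.
  unfold mmul. destruct (Nat.ltb_spec i n); destruct (Nat.ltb_spec j n); simpl; auto.
  transitivity (fsum n (fun k => fsum n (fun l => A i l * B l k * C k j))).
  - apply fsum_ext; intros k Hk. destruct (Nat.ltb_spec k n); try lia. simpl.
    rewrite Rmult_comm, <- fsum_scal. apply fsum_ext; intros; lra.
  - rewrite fsum_swap. apply fsum_ext; intros l Hl. destruct (Nat.ltb_spec l n); try lia. simpl.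
    rewrite <- fsum_scal. apply fsum_ext; intros; lra.
Qed.

Lemma mid_l n B : isMat n B -> mmul n (mid n) B = B.
Proof.
  intros HB. apply functional_extensionality; intro i; apply functional_extensionality; intro j.
  unfold mmul, mid. destruct (Nat.ltb_spec i n); destruct (Nat.ltb_spec j n); simpl;
    try (rewrite HB; auto; fail).
  transitivity (fsum n (fun k => if Nat.eqb i k then B k j else 0)).
  - apply fsum_ext; intros. destruct (Nat.eqb i k); lra.
  - rewrite fsum_delta. destruct (Nat.ltb_spec i n); try lia. auto.
Qed.

Lemma mid_r n A : isMat n A -> mmul n A (mid n) = A.
Proof.
  intros HA. apply functional_extensionality; intro i; apply functional_extensionality; intro j.
  unfold mmul, mid. destruct (Nat.ltb_spec i n); destruct (Nat.ltb_spec j n); simpl;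
    try (rewrite HA; auto; fail).
  transitivity (fsum n (fun k => if Nat.eqb j k then A i k else 0)).
  - apply fsum_ext; intros k Hk. destruct (Nat.ltb_spec k n); try lia. simpl.
    destruct (Nat.eqb_spec k j); destruct (Nat.eqb_spec j k); try lia; subst; lra.
  - rewrite fsum_delta. destruct (Nat.ltb_spec j n); try lia. auto.
Qed.

Lemma mmul_cv n (U V : nat -> Mat) U0 V0 :
  (forall i j, (i < n)%nat -> (j < n)%nat -> Un_cv (fun m => U m i j) (U0 i j)) ->
  (forall i j, (i < n)%nat -> (j < n)%nat -> Un_cv (fun m => V m i j) (V0 i j)) ->
  forall i j, (i < n)%nat -> (j < n)%nat ->
    Un_cv (fun m => mmul n (U m) (V m) i j) (mmul n U0 V0 i j).
Proof.
  intros HU HV i j Hi Hj. unfold mmul.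
  destruct (Nat.ltb_spec i n); destruct (Nat.ltb_spec j n); try lia. simpl.
  apply (fsum_cv n (fun m k => U m i k * V m k j)). intros k Hk. apply CV_mult; auto.
Qed.

Lemma mvec_isVec n B x : isVec n (mvec n B x).
Proof. intros i Hi. unfold mvec. destruct (Nat.ltb_spec i n); auto; lia. Qed.

Lemma mvec_mvec n D B x : mvec n D (mvec n B x) = mvec n (mmul n D B) x.
Proof.
  apply functional_extensionality; intro i. unfold mvec, mmul.
  destruct (Nat.ltb_spec i n); simpl; auto.
  transitivity (fsum n (fun k => fsum n (fun l => D i k * B k l * x l))).
  - apply fsum_ext; intros k Hk. destruct (Nat.ltb_spec k n); try lia.
    rewrite <- fsum_scal. apply fsum_ext; intros; lra.
  - rewrite fsum_swap. apply fsum_ext; intros l Hl. destruct (Nat.ltb_spec l n); try lia. simpl.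
    rewrite Rmult_comm, <- fsum_scal. apply fsum_ext; intros; lra.
Qed.

Lemma mvec_add n B x y : mvec n B (vadd x y) = vadd (mvec n B x) (mvec n B y).
Proof.
  apply functional_extensionality; intro i. unfold mvec, vadd.
  destruct (Nat.ltb i n); [| lra]. rewrite <- fsum_plus. apply fsum_ext; intros; lra.
Qed.

Lemma mvec_scale n B r x : mvec n B (vscale r x) = vscale r (mvec n B x).
Proof.
  apply functional_extensionality; intro i. unfold mvec, vscale.
  destruct (Nat.ltb i n); [| lra]. rewrite <- fsum_scal. apply fsum_ext; intros; lra.
Qed.

Lemma mvec_sub n B x y : mvec n B (vsub x y) = vsub (mvec n B x) (mvec n B y).
Proof.
  apply functional_extensionality; intro i. unfold mvec, vsub.
  destruct (Nat.ltb i n); [| lra]. rewrite <- fsum_minus. apply fsum_ext; intros; lra.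
Qed.

Lemma mvec_zero n B : mvec n B vzero = vzero.
Proof.
  apply functional_extensionality; intro i. unfold mvec, vzero.
  destruct (Nat.ltb i n); [| lra].
  transitivity (fsum n (fun _ => 0)); [apply fsum_ext; intros; lra | apply fsum_zero].
Qed.

Definition ej (j : nat) : Vec := fun i => if Nat.eqb i j then 1 else 0.

Lemma mvec_ej n D i j : (i < n)%nat -> (j < n)%nat -> mvec n D (ej j) i = D i j.
Proof.
  intros Hi Hj. unfold mvec, ej. destruct (Nat.ltb_spec i n); try lia.
  transitivity (fsum n (fun k => if Nat.eqb j k then D i k else 0)).
  - apply fsum_ext; intros k Hk.
    destruct (Nat.eqb_spec k j); destruct (Nat.eqb_spec j k); try lia; subst; lra.
  - rewrite fsum_delta. destruct (Nat.ltb_spec j n); try lia; auto.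
Qed.

Definition nrm1 (n : nat) (x : Vec) : R := fsum n (fun i => Rabs (x i)).

Lemma nrm1_nonneg n x : 0 <= nrm1 n x.
Proof. apply fsum_nonneg; intros; apply Rabs_pos. Qed.

Lemma mnorm_nonneg n A : 0 <= mnorm n A.
Proof. apply fsum_nonneg; intros; apply fsum_nonneg; intros; apply Rabs_pos. Qed.

Lemma nrm1_coord n x i : (i < n)%nat -> Rabs (x i) <= nrm1 n x.
Proof. intros. apply (fsum_term n (fun i => Rabs (x i))); auto. intros; apply Rabs_pos. Qed.

Lemma nrm1_vzero n : nrm1 n vzero = 0.
Proof. unfold nrm1, vzero. rewrite Rabs_R0. apply fsum_zero. Qed.

Lemma nrm1_scale n r x : nrm1 n (vscale r x) = Rabs r * nrm1 n x.
Proof. unfold nrm1, vscale. rewrite <- fsum_scal. apply fsum_ext. intros. apply Rabs_mult. Qed.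

Lemma nrm1_sub_sym n x y : nrm1 n (vsub x y) = nrm1 n (vsub y x).
Proof. unfold nrm1, vsub. apply fsum_ext; intros. rewrite <- Rabs_Ropp. f_equal; ring. Qed.

Lemma nrm1_mvec n B x : nrm1 n (mvec n B x) <= mnorm n B * nrm1 n x.
Proof.
  unfold nrm1, mnorm. rewrite Rmult_comm, <- fsum_scal. apply fsum_le; intros i Hi.
  unfold mvec. destruct (Nat.ltb_spec i n); try lia.
  eapply Rle_trans. apply fsum_abs. rewrite <- fsum_scal. apply fsum_le; intros k Hk.
  rewrite Rabs_mult. pose proof (nrm1_coord n x k Hk). unfold nrm1 in H0.
  pose proof (Rabs_pos (B i k)). nra.
Qed.

Lemma nrm1_sub_cv n (u : nat -> Vec) y :
  (forall i, (i < n)%nat -> Un_cv (fun k => u k i) (y i)) ->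
  Un_cv (fun k => nrm1 n (vsub (u k) y)) 0.
Proof.
  intros H. unfold nrm1. replace 0 with (fsum n (fun _ => 0)) by apply fsum_zero.
  apply (fsum_cv n (fun k i => Rabs (vsub (u k) y i)) (fun _ => 0)).
  intros i Hi. rewrite <- Rabs_R0. apply cv_cvabs. unfold vsub.
  replace 0 with (y i - y i) by lra. apply CV_minus. auto. apply Un_cv_const.
Qed.

Lemma nrm1_cv n (u : nat -> Vec) y : (forall i, (i < n)%nat -> Un_cv (fun k => u k i) (y i)) ->
  Un_cv (fun k => nrm1 n (u k)) (nrm1 n y).
Proof.
  intros H. unfold nrm1. apply (fsum_cv n (fun k i => Rabs (u k i))).
  intros i Hi. apply cv_cvabs. auto.
Qed.

Lemma entry_le_mnorm n M i j : isMat n M -> Rabs (M i j) <= mnorm n M.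
Proof.
  intros HM. destruct (Nat.lt_ge_cases i n); destruct (Nat.lt_ge_cases j n);
    try (rewrite HM by auto; rewrite Rabs_R0; apply mnorm_nonneg).
  unfold mnorm. eapply Rle_trans.
  2: apply (fsum_term n (fun i => fsum n (fun j => Rabs (M i j))) i); auto.
  - apply (fsum_term n (fun j => Rabs (M i j))); auto. intros; apply Rabs_pos.
  - intros; apply fsum_nonneg; intros; apply Rabs_pos.
Qed.

Lemma mnorm_mid n : mnorm n (mid n) = INR n.
Proof.
  unfold mnorm, mid. rewrite <- (Rmult_1_r (INR n)), <- fsum_const. apply fsum_ext. intros i Hi.
  transitivity (fsum n (fun j => if Nat.eqb i j then 1 else 0)).
  - apply fsum_ext; intros j Hj. destruct (Nat.ltb_spec i n); try lia. simpl.
    destruct (Nat.eqb i j). apply Rabs_R1. apply Rabs_R0.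
  - rewrite fsum_delta. destruct (Nat.ltb_spec i n); try lia. auto.
Qed.

Lemma mnorm_mul n A B : mnorm n (mmul n A B) <= mnorm n A * mnorm n B.
Proof.
  unfold mnorm at 1. unfold mmul.
  apply Rle_trans with (fsum n (fun i => fsum n (fun l => Rabs (A i l) * mnorm n B))).
  - apply fsum_le; intros i Hi.
    apply Rle_trans with (fsum n (fun j => fsum n (fun l => Rabs (A i l) * Rabs (B l j)))).
    + apply fsum_le; intros j Hj.
      destruct (Nat.ltb_spec i n); destruct (Nat.ltb_spec j n); try lia. simpl.
      eapply Rle_trans. apply fsum_abs. apply fsum_le; intros. rewrite Rabs_mult; lra.
    + rewrite fsum_swap. apply fsum_le; intros l Hl. rewrite fsum_scal.
      apply Rmult_le_compat_l. apply Rabs_pos.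
      unfold mnorm. apply (fsum_term n (fun i => fsum n (fun j => Rabs (B i j)))); auto.
      intros; apply fsum_nonneg; intros; apply Rabs_pos.
  - unfold mnorm at 2. rewrite Rmult_comm, <- fsum_scal. apply fsum_le; intros i Hi.
    rewrite <- fsum_scal. apply fsum_le; intros; lra.
Qed.

(** * Proper cones *)

Section Cone.
Variables (n : nat) (K : Vec -> Prop).
Hypothesis HK : proper_cone n K.

Lemma K_isVec x : K x -> isVec n x.
Proof. apply HK. Qed.

Lemma K_scale x r : K x -> 0 < r -> K (vscale r x).
Proof. apply HK. Qed.

Lemma K_conv : convex_set K.
Proof. apply HK. Qed.

Lemma K_pointed x : K x -> K (vopp x) -> x = vzero.
Proof. apply HK. Qed.

Lemma K_closed (u : nat -> Vec) x : (forall k, K (u k)) -> isVec n x ->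
  (forall i, (i < n)%nat -> Un_cv (fun k => u k i) (x i)) -> K x.
Proof. apply HK. Qed.

(* 0 is in K, as the limit of (1/(k+1)) x for any x in K. *)
Lemma K_zero : K vzero.
Proof.
  destruct HK as [_ [[x Hx] _]].
  apply (K_closed (fun k => vscale (/ (INR k + 1)) x)).
  - intros k. apply K_scale; auto. apply Rinv_0_lt_compat. pose proof (pos_INR k). lra.
  - intros i _. reflexivity.
  - intros i Hi. unfold vscale, vzero. replace 0 with (0 * x i) by lra.
    apply (CV_mult (fun k => / (INR k + 1)) (fun _ => x i)).
    exact RinvN_cv. apply Un_cv_const.
Qed.

Lemma K_scale0 x r : K x -> 0 <= r -> K (vscale r x).
Proof.
  intros Hx [Hr | Hr]. apply K_scale; auto. subst.
  replace (vscale 0 x) with vzero. apply K_zero. vec_ext.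
Qed.

Lemma K_add x y : K x -> K y -> K (vadd x y).
Proof.
  intros Hx Hy.
  replace (vadd x y) with (vscale 2 (vadd (vscale (/2) x) (vscale (1 - /2) y))) by vec_ext.
  apply K_scale; [| lra]. apply K_conv; auto; lra.
Qed.

Section InteriorPoint.
Variables (x0 : Vec) (eps : R).
Hypothesis Hx0 : K x0.
Hypothesis Heps : 0 < eps.
Hypothesis Hint : forall y, isVec n y -> (forall i, (i < n)%nat -> Rabs (y i - x0 i) < eps) -> K y.

Lemma K_interior_dominates z c : isVec n z -> 0 < c -> nrm1 n z < c * eps ->
  K (vsub (vscale c x0) z).
Proof.
  intros Hz Hc Hn.
  replace (vsub (vscale c x0) z) with (vscale c (vsub x0 (vscale (/ c) z))) by vec_ext.
  apply K_scale; auto. apply Hint.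
  - intros i Hi. unfold vsub, vscale. rewrite (K_isVec x0 Hx0 i Hi), (Hz i Hi). lra.
  - intros i Hi. unfold vsub, vscale.
    replace (x0 i - / c * z i - x0 i) with (- (/ c * z i)) by lra.
    rewrite Rabs_Ropp, Rabs_mult, Rabs_pos_eq by (left; apply Rinv_0_lt_compat; auto).
    pose proof (nrm1_coord n z i Hi). apply Rmult_lt_reg_l with c; auto.
    rewrite <- Rmult_assoc, Rinv_r by lra. lra.
Qed.

Lemma K_interior_axis j s : (j < n)%nat -> -1 <= s <= 1 ->
  K (vadd x0 (vscale (s * (eps / 2)) (ej j))).
Proof.
  intros Hj Hs. apply Hint.
  - intros i Hi. unfold vadd, vscale, ej. rewrite (K_isVec x0 Hx0 i Hi).
    destruct (Nat.eqb_spec i j); try lia. lra.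
  - intros i Hi. unfold vadd, vscale, ej.
    replace (x0 i + s * (eps / 2) * (if Nat.eqb i j then 1 else 0) - x0 i)
      with (s * (eps / 2) * (if Nat.eqb i j then 1 else 0)) by ring.
    destruct (Nat.eqb i j).
    + rewrite Rmult_1_r, Rabs_mult, (Rabs_pos_eq (eps/2)) by lra.
      assert (Rabs s <= 1) by (apply Rabs_le; lra). nra.
    + rewrite Rmult_0_r, Rabs_R0. lra.
Qed.

Lemma pi_kills_interior D : in_pi n K D -> mvec n D x0 = vzero ->
  forall i j, (i < n)%nat -> (j < n)%nat -> D i j = 0.
Proof.
  intros HD H0 i j Hi Hj.
  pose proof (HD _ (K_interior_axis j 1 Hj ltac:(lra))) as Hp.
  pose proof (HD _ (K_interior_axis j (-1) Hj ltac:(lra))) as Hm.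
  rewrite mvec_add, mvec_scale, H0 in Hp, Hm.
  assert (E : vadd vzero (vscale (1 * (eps / 2)) (mvec n D (ej j))) = vzero).
  { apply K_pointed; auto.
    replace (vopp (vadd vzero (vscale (1 * (eps / 2)) (mvec n D (ej j)))))
      with (vadd vzero (vscale (-1 * (eps / 2)) (mvec n D (ej j)))) by vec_ext. auto. }
  assert (E2 := f_equal (fun v => v i) E). simpl in E2. unfold vadd, vscale, vzero in E2.
  rewrite mvec_ej in E2 by auto. nra.
Qed.

Lemma mnorm_le_of_cone_bound B c : 0 < c ->
  (forall x, K x -> c * nrm1 n (mvec n B x) <= nrm1 n x / eps) ->
  mnorm n B <= INR n * (2 * (nrm1 n x0 + INR n * (eps / 2)) / (c * eps * eps)).
Proof.
  intros Hc Hk. set (C1 := 2 * (nrm1 n x0 + INR n * (eps / 2)) / (c * eps * eps)).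
  assert (Hcol : forall j, (j < n)%nat -> fsum n (fun i => Rabs (B i j)) <= C1).
  { intros j Hj.
    set (xp := vadd x0 (vscale (1 * (eps / 2)) (ej j))).
    set (xm := vadd x0 (vscale (-1 * (eps / 2)) (ej j))).
    pose proof (Hk xp (K_interior_axis j 1 Hj ltac:(lra))) as Hkp.
    pose proof (Hk xm (K_interior_axis j (-1) Hj ltac:(lra))) as Hkm.
    assert (Hn : forall s, -1 <= s <= 1 ->
              nrm1 n (vadd x0 (vscale (s * (eps / 2)) (ej j))) <= nrm1 n x0 + INR n * (eps / 2)).
    { intros s Hs. unfold nrm1. rewrite <- fsum_const, <- fsum_plus. apply fsum_le. intros i Hi.
      unfold vadd, vscale, ej. eapply Rle_trans. apply Rabs_triang. apply Rplus_le_compat_l.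
      rewrite !Rabs_mult, (Rabs_pos_eq (eps / 2)) by lra.
      assert (Rabs s <= 1) by (apply Rabs_le; lra). pose proof (Rabs_pos s).
      destruct (Nat.eqb i j); rewrite ?Rabs_R1, ?Rabs_R0; nra. }
    pose proof (Hn 1 ltac:(lra)) as Hnp. pose proof (Hn (-1) ltac:(lra)) as Hnm. fold xp xm in Hnp, Hnm.
    assert (Hdiff : fsum n (fun i => Rabs (B i j)) * eps <= nrm1 n (mvec n B xp) + nrm1 n (mvec n B xm)).
    { unfold nrm1. rewrite <- fsum_plus, Rmult_comm, <- fsum_scal. apply fsum_le. intros i Hi.
      assert (E : eps * B i j = mvec n B xp i - mvec n B xm i).
      { unfold xp, xm. rewrite !mvec_add, !mvec_scale. unfold vadd, vscale.
        rewrite mvec_ej by auto. lra. }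
      rewrite <- (Rabs_pos_eq eps) at 1 by lra. rewrite <- Rabs_mult, E.
      unfold Rminus. eapply Rle_trans. apply Rabs_triang. rewrite Rabs_Ropp. lra. }
    unfold C1. apply Rmult_le_reg_r with (c * eps * eps). repeat apply Rmult_lt_0_compat; lra.
    replace (2 * (nrm1 n x0 + INR n * (eps / 2)) / (c * eps * eps) * (c * eps * eps))
      with (2 * (nrm1 n x0 + INR n * (eps / 2))) by (field; lra).
    assert (Hsum : c * (nrm1 n (mvec n B xp) + nrm1 n (mvec n B xm)) * eps <= nrm1 n xp + nrm1 n xm).
    { replace (nrm1 n xp + nrm1 n xm) with ((nrm1 n xp / eps + nrm1 n xm / eps) * eps) by (field; lra).
      apply Rmult_le_compat_r; lra. }
    assert (Hce : 0 <= c * eps) by nra.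
    assert (c * eps * (fsum n (fun i => Rabs (B i j)) * eps)
            <= c * eps * (nrm1 n (mvec n B xp) + nrm1 n (mvec n B xm)))
      by (apply Rmult_le_compat_l; auto).
    nra. }
  unfold mnorm. rewrite fsum_swap, <- fsum_const. apply fsum_le. auto.
Qed.

End InteriorPoint.
End Cone.

(** * The abstract boundedness theorem *)

Definition approx_closed (n : nat) (Tm : R -> Prop) (S : R -> Mat -> Prop) : Prop :=
  forall t s D B, Tm t -> Tm s -> S t D -> S s B -> Tm (t + s) /\
    exists u : nat -> Mat, (forall m, S (t + s) (u m)) /\
      forall i j, (i < n)%nat -> (j < n)%nat -> Un_cv (fun m => u m i j) (mmul n D B i j).

Section AbstractBound.
Variables (n : nat) (K : Vec -> Prop) (Tm : R -> Prop) (Sg : R -> Mat -> Prop).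
Hypothesis HK : proper_cone n K.
Hypothesis Tm_nonneg : forall t, Tm t -> 0 <= t.
Hypothesis Tm_unbounded : forall T, exists t, Tm t /\ T <= t.
Hypothesis Hclosed : approx_closed n Tm Sg.
Hypothesis Hpi : forall t B, Tm t -> Sg t B -> in_pi n K B.
Hypothesis Hjsr : jsr_eq n Tm Sg 1.

Variables (x0 : Vec) (eps : R).
Hypothesis Hx0 : K x0.
Hypothesis Heps : 0 < eps.
Hypothesis Hint : forall y, isVec n y -> (forall i, (i < n)%nat -> Rabs (y i - x0 i) < eps) -> K y.

Let K_add' x y : K x -> K y -> K (vadd x y) := K_add n K HK x y.
Let K_scale' x r : K x -> 0 < r -> K (vscale r x) := K_scale n K HK x r.
Let K_dom z c : isVec n z -> 0 < c -> nrm1 n z < c * eps -> K (vsub (vscale c x0) z) :=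
  K_interior_dominates n K HK x0 eps Hx0 Hint z c.

Definition growth_bound (a T1 : R) : Prop :=
  forall t B, Tm t -> T1 <= t -> Sg t B -> mnorm n B <= exp (a * t).

Definition dominated (a T1 : R) (x : Vec) (c : R) : Prop :=
  0 <= c /\ forall t B, Tm t -> T1 <= t -> Sg t B ->
    K (vsub (vscale (c * exp (a * t)) x0) (mvec n B x)).

Definition gauge (a T1 : R) (x : Vec) : R := inf_of (dominated a T1 x).

Lemma growth_bound_exists a : 0 < a -> exists T1, growth_bound a T1.
Proof.
  intros Ha. destruct Hjsr as [s [Hs Hl]].
  assert (He : 0 < exp a - 1) by (pose proof (exp_ineq1 a ltac:(lra)); lra).
  destruct (Hl _ He) as [T HT]. exists (Rmax T 1).
  intros t B Ht HT1 HB. pose proof (Rmax_l T 1). pose proof (Rmax_r T 1).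
  assert (HBs : mnorm n B <= s t) by (apply (proj1 (Hs t Ht)); eauto).
  specialize (HT t Ht ltac:(lra)). unfold rootp in HT.
  destruct (Rle_dec (s t) 0). pose proof (exp_pos (a * t)). lra.
  apply Rabs_def2 in HT. destruct HT as [HT _]. unfold Rpower in HT.
  assert (/ t * ln (s t) < a) by (apply exp_lt_inv; lra).
  assert (ln (s t) < a * t).
  { apply Rmult_lt_reg_l with (/ t). apply Rinv_0_lt_compat; lra.
    replace (/ t * (a * t)) with a by (field; lra). auto. }
  apply exp_increasing in H2. rewrite exp_ln in H2 by lra. lra.
Qed.

Lemma not_eventually_zero T1 :
  ~ (forall t D, Tm t -> T1 <= t -> Sg t D -> mnorm n D = 0).
Proof.
  intros H. destruct Hjsr as [s [Hs Hl]]. destruct (Hl (/2) ltac:(lra)) as [T HT].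
  destruct (Tm_unbounded (Rmax T T1)) as [t [Ht Ht2]].
  assert (s t <= 0).
  { apply (proj2 (Hs t Ht)). intros x [B [HB ->]]. rewrite (H t B Ht); auto. lra.
    pose proof (Rmax_r T T1); lra. }
  specialize (HT t Ht ltac:(pose proof (Rmax_l T T1); lra)). unfold rootp in HT.
  destruct (Rle_dec (s t) 0); try lra. rewrite Rminus_0_l, Rabs_Ropp, Rabs_R1 in HT. lra.
Qed.

Section FixedRate.
Variables (a T1 : R).
Hypothesis Hgrowth : growth_bound a T1.

Lemma dominated_exists x : K x -> exists c, dominated a T1 x c.
Proof.
  intros Hx. exists (nrm1 n x / eps + 1).
  assert (0 <= nrm1 n x / eps) by (apply Rdiv_nonneg; [apply nrm1_nonneg | lra]).
  split. lra. intros t B Ht HT HS. pose proof (exp_pos (a * t)).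
  apply K_dom. apply mvec_isVec. nra.
  eapply Rle_lt_trans. apply nrm1_mvec. specialize (Hgrowth t B Ht HT HS).
  pose proof (nrm1_nonneg n x). pose proof (mnorm_nonneg n B).
  replace ((nrm1 n x / eps + 1) * exp (a * t) * eps) with (exp (a * t) * (nrm1 n x + eps))
    by (field; lra).
  nra.
Qed.

Lemma gauge_le x c : dominated a T1 x c -> gauge a T1 x <= c.
Proof. intros H. apply inf_of_le; auto. intros ? []; auto. Qed.

Lemma gauge_approx x e : K x -> 0 < e -> exists c, dominated a T1 x c /\ c < gauge a T1 x + e.
Proof. intros Hx He. apply inf_of_approx; auto. apply dominated_exists; auto. intros ? []; auto. Qed.

Lemma gauge_nonneg x : K x -> 0 <= gauge a T1 x.
Proof. intros Hx. apply inf_of_nonneg. apply dominated_exists; auto. intros ? []; auto. Qed.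

Lemma gauge_transfer x y k0 b : K x -> 0 <= k0 ->
  (forall c, dominated a T1 x c -> dominated a T1 y (k0 * c + b)) ->
  gauge a T1 y <= k0 * gauge a T1 x + b.
Proof.
  intros Hx Hk H. apply Rnot_lt_le. intros Hlt.
  set (e := (gauge a T1 y - (k0 * gauge a T1 x + b)) / (k0 + 1)).
  assert (He : 0 < e) by (unfold e; apply Rdiv_lt_0_compat; lra).
  destruct (gauge_approx x e Hx He) as [c [Hc Hc2]].
  pose proof (gauge_le _ _ (H c Hc)).
  assert (k0 * c <= k0 * (gauge a T1 x + e)) by nra.
  assert (k0 * e < gauge a T1 y - (k0 * gauge a T1 x + b)).
  { unfold e. apply Rmult_lt_reg_r with (k0 + 1). lra.
    replace (k0 * ((gauge a T1 y - (k0 * gauge a T1 x + b)) / (k0 + 1)) * (k0 + 1))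
      with (k0 * (gauge a T1 y - (k0 * gauge a T1 x + b))) by (field; lra). nra. }
  lra.
Qed.

Lemma gauge_zero : gauge a T1 vzero = 0.
Proof.
  apply Rle_antisym; [| apply gauge_nonneg, (K_zero n K HK)].
  apply Rnot_lt_le. intros Hlt.
  assert (Hd : dominated a T1 vzero (gauge a T1 vzero / 2)).
  { split. lra. intros t B Ht HT HS. rewrite mvec_zero.
    replace (vsub _ vzero) with (vscale (gauge a T1 vzero / 2 * exp (a * t)) x0) by vec_ext.
    apply K_scale'; auto. pose proof (exp_pos (a * t)). nra. }
  pose proof (gauge_le _ _ Hd). lra.
Qed.

Lemma gauge_scale x r : K x -> 0 <= r -> gauge a T1 (vscale r x) <= r * gauge a T1 x.
Proof.
  intros Hx [Hr | Hr].
  - replace (r * gauge a T1 x) with (r * gauge a T1 x + 0) by ring.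
    apply gauge_transfer; auto. lra.
    intros c [Hc H]. rewrite Rplus_0_r. split. nra. intros t B Ht HT HS.
    replace (vsub (vscale (r * c * exp (a * t)) x0) (mvec n B (vscale r x)))
      with (vscale r (vsub (vscale (c * exp (a * t)) x0) (mvec n B x)))
      by (rewrite mvec_scale; vec_ext).
    apply K_scale'; auto.
  - subst. replace (vscale 0 x) with vzero by vec_ext. rewrite gauge_zero. lra.
Qed.

Lemma gauge_mono x y : K x -> K y -> Kge K x y -> gauge a T1 y <= gauge a T1 x.
Proof.
  intros Hx Hy Hxy. replace (gauge a T1 x) with (1 * gauge a T1 x + 0) by ring.
  apply gauge_transfer; auto. lra.
  intros c [Hc H]. replace (1 * c + 0) with c by ring. split; auto. intros t B Ht HT HS.
  replace (vsub (vscale (c * exp (a * t)) x0) (mvec n B y)) with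
    (vadd (vsub (vscale (c * exp (a * t)) x0) (mvec n B x)) (mvec n B (vsub x y)))
    by (rewrite mvec_sub; vec_ext).
  apply K_add'; auto. apply (Hpi t B Ht HS). auto.
Qed.

Lemma gauge_add x y : K x -> K y -> gauge a T1 (vadd x y) <= gauge a T1 x + gauge a T1 y.
Proof.
  intros Hx Hy. apply Rnot_lt_le. intros Hlt.
  set (e := (gauge a T1 (vadd x y) - gauge a T1 x - gauge a T1 y) / 2).
  assert (He : 0 < e) by (unfold e; lra).
  destruct (gauge_approx x e Hx He) as [c1 [[Hc1 H1] H1']].
  destruct (gauge_approx y e Hy He) as [c2 [[Hc2 H2] H2']].
  assert (Hd : dominated a T1 (vadd x y) (c1 + c2)).
  { split. lra. intros t B Ht HT HS.
    replace (vsub (vscale ((c1 + c2) * exp (a * t)) x0) (mvec n B (vadd x y))) with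
      (vadd (vsub (vscale (c1 * exp (a * t)) x0) (mvec n B x))
            (vsub (vscale (c2 * exp (a * t)) x0) (mvec n B y))) by (rewrite mvec_add; vec_ext).
    apply K_add'; auto. }
  pose proof (gauge_le _ _ Hd). unfold e in *. lra.
Qed.

(* Here approximate closedness of the family is used: B in S_s maps a
   dominated vector at times t to one dominated at times t + s. *)
Lemma gauge_apply s B x : K x -> Tm s -> Sg s B ->
  gauge a T1 (mvec n B x) <= exp (a * s) * gauge a T1 x.
Proof.
  intros Hx Hs HB. replace (exp (a * s) * gauge a T1 x) with (exp (a * s) * gauge a T1 x + 0) by ring.
  apply gauge_transfer; auto. left; apply exp_pos.
  intros c [Hc H]. rewrite Rplus_0_r. split. pose proof (exp_pos (a * s)); nra.
  intros t D Ht HT HD. destruct (Hclosed t s D B Ht Hs HD HB) as [Hts [u [Hu Hcv]]].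
  pose proof (Tm_nonneg s Hs).
  rewrite mvec_mvec. replace (exp (a * s) * c * exp (a * t)) with (c * exp (a * (t + s)))
    by (rewrite Rmult_plus_distr_l, exp_plus; ring).
  apply (K_closed n K HK (fun m => vsub (vscale (c * exp (a * (t + s))) x0) (mvec n (u m) x))).
  - intros m. apply H; auto. lra.
  - intros i Hi. unfold vsub, vscale.
    rewrite (K_isVec n K HK x0 Hx0 i Hi), (mvec_isVec n _ x i Hi). lra.
  - intros i Hi. unfold vsub, vscale, mvec. destruct (Nat.ltb_spec i n); try lia.
    apply CV_minus. apply Un_cv_const. apply (fsum_cv n (fun m k => u m i k * x k)).
    intros k Hk. apply CV_mult. apply Hcv; auto. apply Un_cv_const.
Qed.

Lemma gauge_near y z d : K y -> K z -> 0 < d -> nrm1 n (vsub y z) < d * eps ->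
  gauge a T1 y <= gauge a T1 z + d * gauge a T1 x0.
Proof.
  intros Hy Hz Hd Hyz.
  assert (Hzd : K (vadd z (vscale d x0))) by (apply K_add'; auto).
  eapply Rle_trans. apply (gauge_mono (vadd z (vscale d x0)) y); auto.
  - unfold Kge. replace (vsub (vadd z (vscale d x0)) y) with (vsub (vscale d x0) (vsub y z)) by vec_ext.
    apply K_dom; auto. intros i Hi. unfold vsub.
    rewrite (K_isVec n K HK y Hy i Hi), (K_isVec n K HK z Hz i Hi). lra.
  - eapply Rle_trans. apply gauge_add; auto. pose proof (gauge_scale x0 d Hx0 ltac:(lra)). lra.
Qed.

Lemma gauge_le_norm x d : K x -> 0 < d -> gauge a T1 x <= (nrm1 n x / eps + d) * gauge a T1 x0.
Proof.
  intros Hx Hd. set (c := nrm1 n x / eps + d).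
  assert (0 <= nrm1 n x / eps) by (apply Rdiv_nonneg; [apply nrm1_nonneg | lra]).
  pose proof (gauge_near x vzero c Hx (K_zero n K HK) ltac:(unfold c; lra)) as Hnear.
  rewrite gauge_zero, Rplus_0_l in Hnear. apply Hnear.
  replace (vsub x vzero) with x by vec_ext. unfold c.
  replace ((nrm1 n x / eps + d) * eps) with (nrm1 n x + d * eps) by (field; lra). nra.
Qed.

(* The interior point has positive gauge: otherwise every D in S_t
   (t >= T1) would kill x0, hence vanish. *)
Lemma gauge_x0_pos : 0 < gauge a T1 x0.
Proof.
  destruct (gauge_nonneg x0 Hx0) as [H | H]; auto. exfalso.
  apply (not_eventually_zero T1). intros t D Ht HT HD.
  assert (Hc : forall m, exists c, dominated a T1 x0 c /\ c < / (INR m + 1)).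
  { intros m. destruct (gauge_approx x0 (/ (INR m + 1)) Hx0) as [c [Hc1 Hc2]].
    apply Rinv_0_lt_compat. pose proof (pos_INR m); lra. exists c. split; auto. lra. }
  destruct (choice_nat _ Hc) as [cs Hcs].
  assert (Hz : mvec n D x0 = vzero).
  { apply (K_pointed n K HK). apply (Hpi t D Ht HD); auto.
    apply (K_closed n K HK (fun m => vsub (vscale (cs m * exp (a * t)) x0) (mvec n D x0))).
    - intros m. destruct (Hcs m) as [[_ Hm] _]. apply Hm; auto.
    - intros i Hi. unfold vopp. rewrite (mvec_isVec n D x0 i Hi). lra.
    - intros i Hi. unfold vsub, vscale, vopp.
      replace (- mvec n D x0 i) with (0 * exp (a * t) * x0 i - mvec n D x0 i) by ring.
      apply CV_minus; [| apply Un_cv_const].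
      apply (CV_mult (fun m => cs m * exp (a * t)) (fun _ => x0 i)); [| apply Un_cv_const].
      apply (CV_mult cs (fun _ => exp (a * t))); [| apply Un_cv_const].
      apply (Un_cv_squeeze0 cs (fun m => / (INR m + 1))); [| exact RinvN_cv].
      intros m. destruct (Hcs m) as [[Hm1 _] Hm2]. lra. }
  unfold mnorm. transitivity (fsum n (fun _ => fsum n (fun _ => 0))).
  - apply fsum_ext; intros i Hi. apply fsum_ext; intros j Hj.
    rewrite (pi_kills_interior n K HK x0 eps Hx0 Heps Hint D (Hpi t D Ht HD) Hz i j Hi Hj).
    apply Rabs_R0.
  - rewrite fsum_zero. apply fsum_zero.
Qed.

End FixedRate.

Variables (T0 : R) (m0 : nat) (w : nat -> R) (Bs : nat -> Mat).
Hypothesis HT0 : Tm T0.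
Hypothesis Hw : forall k, (k < m0)%nat -> 0 <= w k /\ Sg T0 (Bs k).
Hypothesis Hw1 : fsum m0 w = 1.
Hypothesis Hirr : K_irreducible n K (fun i j => fsum m0 (fun k => w k * Bs k i j)).

Let Airr : Mat := fun i j => fsum m0 (fun k => w k * Bs k i j).

(* By sublinearity the gauge grows like e^{a T0} along the convex combination. *)
Lemma gauge_average a T1 x : growth_bound a T1 -> K x ->
  gauge a T1 (mvec n Airr x) <= exp (a * T0) * gauge a T1 x.
Proof.
  intros Hb Hx.
  set (vp := fun m' => fun i => fsum m' (fun k => w k * mvec n (Bs k) x i)).
  assert (Hvp : forall m', (m' <= m0)%nat ->
            K (vp m') /\ gauge a T1 (vp m') <= fsum m' w * (exp (a * T0) * gauge a T1 x)).
  { induction m'; intros Hm'.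
    - replace (vp 0%nat) with vzero by (unfold vp; vec_ext).
      rewrite gauge_zero by auto. split. apply (K_zero n K HK). simpl; lra.
    - destruct IHm' as [IH1 IH2]; [lia |]. destruct (Hw m' ltac:(lia)) as [Hwm HBm].
      assert (E : vp (S m') = vadd (vp m') (vscale (w m') (mvec n (Bs m') x))) by (unfold vp; vec_ext).
      assert (KB : K (mvec n (Bs m') x)) by (apply (Hpi T0 (Bs m') HT0 HBm); auto).
      assert (KwB : K (vscale (w m') (mvec n (Bs m') x))) by (apply (K_scale0 n K HK); auto).
      rewrite E. split. apply K_add'; auto.
      eapply Rle_trans. apply gauge_add; auto.
      pose proof (gauge_scale a T1 Hb (mvec n (Bs m') x) (w m') KB Hwm).
      pose proof (gauge_apply a T1 Hb T0 (Bs m') x Hx HT0 HBm).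
      simpl fsum. nra. }
  replace (mvec n Airr x) with (vp m0).
  - destruct (Hvp m0 (le_n _)) as [_ H]. rewrite Hw1 in H. lra.
  - apply functional_extensionality; intros i. symmetry. unfold vp, mvec, Airr. destruct (Nat.ltb i n).
    + transitivity (fsum n (fun l => fsum m0 (fun k => w k * Bs k i l * x l))).
      * apply fsum_ext; intros. rewrite Rmult_comm, <- fsum_scal; apply fsum_ext; intros; ring.
      * rewrite fsum_swap. apply fsum_ext; intros. rewrite <- fsum_scal; apply fsum_ext; intros; ring.
    + symmetry. transitivity (fsum m0 (fun _ => 0)). apply fsum_ext; intros; ring. apply fsum_zero.
Qed.

(* For a sequence of rates in (0,1] with growth thresholds, the vectors
   whose gauge becomes negligible compared to that of x0 form a face of K
   invariant under the irreducible element, hence the zero face. *)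
Section NegligibleFace.
Variables (rates thresholds : nat -> R).
Hypothesis Hrates : forall k, rates k <= 1.
Hypothesis Hgrowth : forall k, growth_bound (rates k) (thresholds k).

Let G k x := gauge (rates k) (thresholds k) x.

Definition negligible (x : Vec) : Prop :=
  K x /\ forall e, 0 < e -> exists J, forall k, (J <= k)%nat -> G k x < e * G k x0.

Lemma negligible_face : face K negligible.
Proof.
  assert (Hpos : forall k, 0 < G k x0) by (intros k; apply gauge_x0_pos, Hgrowth).
  split; [| split; [| split; [| split]]].
  - exists vzero. split. apply (K_zero n K HK). intros e He. exists 0%nat. intros k _.
    specialize (Hpos k). unfold G in *. rewrite gauge_zero by auto. nra.
  - intros x r [Hx HZ] Hr. split. apply K_scale'; auto. intros e He.
    destruct (HZ (e / r)) as [J HJ]. apply Rdiv_lt_0_compat; auto.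
    exists J. intros k Hk. specialize (HJ k Hk). unfold G in *.
    eapply Rle_lt_trans. apply gauge_scale; auto. lra.
    replace (e * gauge (rates k) (thresholds k) x0)
      with (r * (e / r * gauge (rates k) (thresholds k) x0)) by (field; lra).
    apply Rmult_lt_compat_l; auto.
  - intros x z l [Hx HZx] [Hz HZz] Hl. split. apply (K_conv n K HK); auto. intros e He.
    destruct (HZx (e / 2)) as [J1 HJ1]. lra. destruct (HZz (e / 2)) as [J2 HJ2]. lra.
    exists (max J1 J2). intros k Hk. specialize (HJ1 k ltac:(lia)). specialize (HJ2 k ltac:(lia)).
    unfold G in *. eapply Rle_lt_trans. apply gauge_add; auto.
    apply (K_scale0 n K HK); [auto | lra]. apply (K_scale0 n K HK); [auto | lra].
    pose proof (gauge_scale _ _ (Hgrowth k) x l Hx ltac:(lra)).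
    pose proof (gauge_scale _ _ (Hgrowth k) z (1 - l) Hz ltac:(lra)).
    specialize (Hpos k). nra.
  - intros x [Hx _]; auto.
  - intros x z [Hx HZ] Hxz Hz0. unfold Kge in Hz0. replace (vsub z vzero) with z in Hz0 by vec_ext.
    split; auto. intros e He. destruct (HZ e He) as [J HJ]. exists J. intros k Hk.
    eapply Rle_lt_trans; [apply (gauge_mono _ _ (Hgrowth k) x z); auto | exact (HJ k Hk)].
Qed.

Lemma negligible_invariant x : negligible x -> negligible (mvec n Airr x).
Proof.
  intros [Hx HZ]. split. apply (proj1 Hirr); auto. intros e He.
  destruct (HZ (e / exp T0)) as [J HJ]. apply Rdiv_lt_0_compat; auto. apply exp_pos.
  exists J. intros k Hk. specialize (HJ k Hk). unfold G in *.
  eapply Rle_lt_trans. apply gauge_average; auto.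
  assert (exp (rates k * T0) <= exp T0).
  { apply exp_le_mono. pose proof (Tm_nonneg T0 HT0). specialize (Hrates k).
    assert (rates k * T0 <= 1 * T0) by (apply Rmult_le_compat_r; auto). lra. }
  pose proof (gauge_nonneg _ _ (Hgrowth k) x Hx). pose proof (exp_pos T0).
  pose proof (exp_pos (rates k * T0)).
  apply Rle_lt_trans with (exp T0 * gauge (rates k) (thresholds k) x). nra.
  replace (e * gauge (rates k) (thresholds k) x0)
    with (exp T0 * (e / exp T0 * gauge (rates k) (thresholds k) x0)) by (field; lra).
  apply Rmult_lt_compat_l; auto.
Qed.

Lemma negligible_zero x : negligible x -> x = vzero.
Proof.
  intros Hx. destruct ((proj2 Hirr) negligible negligible_face negligible_invariant) as [H0 | HK0].
  - apply H0; auto.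
  - exfalso. destruct (proj2 (HK0 x0) Hx0) as [_ HZ]. destruct (HZ 1 ltac:(lra)) as [J HJ].
    specialize (HJ J (le_n _)). lra.
Qed.

Lemma negligible_limit (yy : nat -> Vec) y : (forall k, K (yy k)) -> K y ->
  (forall i, (i < n)%nat -> Un_cv (fun k => yy k i) (y i)) ->
  (forall k, G k (yy k) < / (INR k + 1) * G k x0) -> negligible y.
Proof.
  intros Hyk Hy Hcv Hsmall. split; auto. intros e He.
  destruct (nrm1_sub_cv n yy y Hcv (e / 2 * eps)) as [J1 HJ1]. nra.
  destruct (inv_Sn_small (e / 2)) as [J2 HJ2]. lra.
  exists (max J1 J2). intros k Hk. specialize (HJ1 k ltac:(lia)). specialize (HJ2 k ltac:(lia)).
  unfold Rdist in HJ1. rewrite Rminus_0_r, Rabs_pos_eq, nrm1_sub_sym in HJ1 by apply nrm1_nonneg.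
  pose proof (gauge_near _ _ (Hgrowth k) y (yy k) (e / 2) Hy (Hyk k) ltac:(lra) HJ1).
  pose proof (gauge_x0_pos _ _ (Hgrowth k)). specialize (Hsmall k). unfold G in *. nra.
Qed.

End NegligibleFace.

(* Otherwise a
   sequence of counterexamples has a limit point y of norm 1 which is
   negligible, contradicting [negligible_zero]. *)
Lemma gauge_uniform_lower : exists c a0, 0 < c /\ 0 < a0 /\
  forall a T1, 0 < a < a0 -> growth_bound a T1 ->
    forall y, K y -> nrm1 n y = 1 -> c * gauge a T1 x0 <= gauge a T1 y.
Proof.
  apply NNPP. intros Hn.
  assert (Hj : forall j : nat, exists p : R * R * Vec,
             0 < fst (fst p) < / (INR j + 1) /\ growth_bound (fst (fst p)) (snd (fst p)) /\
             K (snd p) /\ nrm1 n (snd p) = 1 /\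
             gauge (fst (fst p)) (snd (fst p)) (snd p)
               < / (INR j + 1) * gauge (fst (fst p)) (snd (fst p)) x0).
  { intros j. apply NNPP. intros Hj. apply Hn.
    assert (Hp : 0 < / (INR j + 1)) by (apply Rinv_0_lt_compat; pose proof (pos_INR j); lra).
    exists (/ (INR j + 1)), (/ (INR j + 1)). split; auto. split; auto. intros a T1 Ha Hb y Hy Hny.
    apply Rnot_lt_le. intros Hlt. apply Hj. exists (a, T1, y). simpl. auto. }
  destruct (choice_nat _ Hj) as [f Hf].
  set (aa := fun j => fst (fst (f j))). set (TT := fun j => snd (fst (f j))).
  set (yy := fun j => snd (f j)).
  destruct (BW_subseq_vec n yy 1) as [phi [Hphi [y [Hyv Hycv]]]].
  { intros k i Hi. destruct (Hf k) as [_ [_ [_ [Hn1 _]]]]. rewrite <- Hn1. apply nrm1_coord; auto. }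
  assert (Hb : forall k, growth_bound (aa (phi k)) (TT (phi k))) by (intros k; apply (Hf (phi k))).
  assert (Ha : forall k, aa (phi k) <= 1).
  { intros k. destruct (Hf (phi k)) as [H _]. fold (aa (phi k)) in H.
    assert (/ (INR (phi k) + 1) <= 1).
    { rewrite <- Rinv_1. apply Rinv_le_contravar. lra. pose proof (pos_INR (phi k)); lra. }
    lra. }
  assert (Hyk : forall k, K (yy k)) by (intros k; apply (Hf k)).
  assert (HKy : K y) by (apply (K_closed n K HK (fun k => yy (phi k))); auto).
  assert (Hny : nrm1 n y = 1).
  { apply (UL_sequence (fun k => nrm1 n (yy (phi k)))). apply nrm1_cv; auto.
    apply (Un_cv_ext (fun _ => 1)). intros k. symmetry. apply (Hf (phi k)). apply Un_cv_const. }
  assert (Zy : negligible (fun k => aa (phi k)) (fun k => TT (phi k)) y).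
  { apply (negligible_limit _ _ Hb (fun k => yy (phi k))); auto. intros k.
    destruct (Hf (phi k)) as (_ & _ & _ & _ & Hgy). fold (aa (phi k)) (TT (phi k)) (yy (phi k)) in Hgy.
    pose proof (gauge_x0_pos _ _ (Hb k)).
    assert (/ (INR (phi k) + 1) <= / (INR k + 1)).
    { apply Rinv_le_contravar. pose proof (pos_INR k); lra.
      apply Rplus_le_compat_r, le_INR, incr_ge; auto. }
    nra. }
  apply negligible_zero in Zy; auto. subst. rewrite nrm1_vzero in Hny. lra.
Qed.

Lemma le_of_exp_perturb X Y t a0 : 0 <= Y -> 0 <= t -> 0 < a0 ->
  (forall a d, 0 < a < a0 -> 0 < d -> X <= exp (a * t) * (Y + d)) -> X <= Y.
Proof.
  intros HY Ht Ha0 Hmain. apply Rnot_lt_le. intros Hlt.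
  set (rho := 2 * X / (X + Y)).
  assert (Hrho : 1 < rho).
  { unfold rho. apply Rmult_lt_reg_r with (X + Y). lra.
    replace (2 * X / (X + Y) * (X + Y)) with (2 * X) by (field; lra). lra. }
  assert (Hl : 0 < ln rho) by (rewrite <- ln_1; apply ln_increasing; lra).
  set (a := Rmin (a0 / 2) (ln rho / (t + 1))).
  assert (Ha1 : 0 < a) by (apply Rmin_glb_lt; [lra | apply Rdiv_lt_0_compat; lra]).
  assert (Ha2 : a < a0) by (unfold a; pose proof (Rmin_l (a0 / 2) (ln rho / (t + 1))); lra).
  assert (Hat : a * t < ln rho).
  { pose proof (Rmin_r (a0 / 2) (ln rho / (t + 1))). fold a in H.
    apply Rle_lt_trans with (ln rho / (t + 1) * t). nra.
    apply Rmult_lt_reg_r with (t + 1). lra.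
    replace (ln rho / (t + 1) * t * (t + 1)) with (ln rho * t) by (field; lra). nra. }
  pose proof (Hmain a ((X - Y) / 2) ltac:(lra) ltac:(lra)).
  assert (exp (a * t) < rho) by (rewrite <- (exp_ln rho) by lra; apply exp_increasing; auto).
  assert (exp (a * t) * (Y + (X - Y) / 2) < rho * (Y + (X - Y) / 2)) by (apply Rmult_lt_compat_r; lra).
  assert (rho * (Y + (X - Y) / 2) = X) by (unfold rho; field; lra).
  lra.
Qed.

Lemma orbit_bound : exists c, 0 < c /\
  forall t B x, Tm t -> Sg t B -> K x -> c * nrm1 n (mvec n B x) <= nrm1 n x / eps.
Proof.
  destruct gauge_uniform_lower as [c [a0 [Hc [Ha0 Hcl]]]]. exists c. split; auto.
  intros t B x Ht HB Hx.
  assert (Hz : K (mvec n B x)) by (apply (Hpi t B Ht HB); auto).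
  set (N := nrm1 n (mvec n B x)).
  assert (HN : 0 <= N) by apply nrm1_nonneg.
  apply (le_of_exp_perturb _ _ t a0); auto.
  { apply Rdiv_nonneg; [apply nrm1_nonneg | lra]. }
  intros a d Ha Hd. destruct (growth_bound_exists a ltac:(lra)) as [T1 Hb].
  pose proof (exp_pos (a * t)).
  destruct HN as [HN | HN].
  2:{ rewrite <- HN, Rmult_0_r. pose proof (nrm1_nonneg n x).
      assert (0 <= nrm1 n x / eps) by (apply Rdiv_nonneg; lra). nra. }
  (* normalize B x to the unit sphere and compare gauges *)
  set (yv := vscale (/ N) (mvec n B x)).
  assert (HiN : 0 < / N) by (apply Rinv_0_lt_compat; auto).
  assert (Hny : nrm1 n yv = 1).
  { unfold yv. rewrite nrm1_scale. fold N. rewrite Rabs_pos_eq by lra. field; lra. }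
  pose proof (Hcl a T1 Ha Hb yv (K_scale' _ _ Hz HiN) Hny) as H1.
  pose proof (gauge_scale a T1 Hb (mvec n B x) (/ N) Hz ltac:(lra)) as H2. fold yv in H2.
  pose proof (gauge_apply a T1 Hb t B x Hx Ht HB) as H3.
  pose proof (gauge_le_norm a T1 Hb x d Hx Hd) as H4.
  pose proof (gauge_x0_pos a T1 Hb) as H5. pose proof (gauge_nonneg a T1 Hb x Hx).
  assert (c * N * gauge a T1 x0 <= gauge a T1 (mvec n B x)).
  { apply Rmult_le_reg_l with (/ N); auto.
    replace (/ N * (c * N * gauge a T1 x0)) with (c * gauge a T1 x0) by (field; lra). lra. }
  assert (c * N * gauge a T1 x0 <= exp (a * t) * (nrm1 n x / eps + d) * gauge a T1 x0) by nra.
  apply Rmult_le_reg_r with (gauge a T1 x0); auto.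
Qed.

Theorem bounded_of_irreducible_element : sg_bounded n Tm Sg.
Proof.
  destruct orbit_bound as [c [Hc Hk]].
  exists (INR n * (2 * (nrm1 n x0 + INR n * (eps / 2)) / (c * eps * eps))).
  intros t B Ht HB. apply (mnorm_le_of_cone_bound n K HK x0 eps Hx0 Heps Hint B c Hc).
  intros x Hx. apply (Hk t); auto.
Qed.

End AbstractBound.

Theorem bounded_of_closed_semigroup n K Tm S :
  proper_cone n K -> (forall t, Tm t -> 0 <= t) -> (forall T, exists t, Tm t /\ T <= t) ->
  approx_closed n Tm S -> (forall t B, Tm t -> S t B -> in_pi n K B) ->
  K_irreducible_sg n K Tm S -> jsr_eq n Tm S 1 -> sg_bounded n Tm S.
Proof.
  intros HK Hnn Hunb Hcl Hpi Hirr Hjsr.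
  pose proof HK as (_ & _ & _ & _ & _ & _ & (x0 & eps & Hx0 & Heps & Hint)).
  destruct Hirr as (T0 & HT0 & _ & m0 & w & Bs & Hw & Hw1 & HA).
  eapply bounded_of_irreducible_element; eauto.
Qed.

Lemma halfline_times (Tm : R -> Prop) : (forall t, Tm t <-> 0 <= t) ->
  (forall t, Tm t -> 0 <= t) /\ (forall T, exists t, Tm t /\ T <= t).
Proof.
  intros HT. split.
  - intros t Ht. apply HT; auto.
  - intros T. exists (Rmax T 0). split. apply HT, Rmax_r. apply Rmax_l.
Qed.

Lemma nat_times (Tm : R -> Prop) : (forall t, Tm t <-> exists k : nat, t = INR k) ->
  (forall t, Tm t -> 0 <= t) /\ (forall T, exists t, Tm t /\ T <= t).
Proof.
  intros HT. split.
  - intros t Ht. apply HT in Ht. destruct Ht as [k ->]. apply pos_INR.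
  - intros T. destruct (archimed T) as [H1 _]. destruct (Z_lt_le_dec (up T) 0).
    + exists 0. split. apply HT. exists 0%nat; auto.
      assert (IZR (up T) < 0) by (apply IZR_lt; auto). lra.
    + exists (INR (Z.to_nat (up T))). split. apply HT; eauto.
      rewrite INR_IZR_INZ, Z2Nat.id by auto. lra.
Qed.

Lemma approx_closed_of_closed n (Tm : R -> Prop) (S : R -> Mat -> Prop) :
  (forall t s D B, Tm t -> Tm s -> S t D -> S s B -> Tm (t + s) /\ S (t + s) (mmul n D B)) ->
  approx_closed n Tm S.
Proof.
  intros H t s D B Ht Hs HD HB. destruct (H t s D B Ht Hs HD HB) as [Hts HS].
  split; auto. exists (fun _ => mmul n D B). split; auto. intros; apply Un_cv_const.
Qed.

(** * (A) Discrete semigroups *)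

Lemma disc_S_isMat n M k B : disc_S n M k B -> isMat n B.
Proof.
  destruct k; simpl. intros ->. apply mid_isMat. intros (A & C & _ & _ & ->). apply mmul_isMat.
Qed.

Lemma disc_S_mul n M k l D B : disc_S n M k D -> disc_S n M l B -> disc_S n M (k + l) (mmul n D B).
Proof.
  revert D. induction k; intros D HD HB; simpl in *.
  - subst. rewrite mid_l; auto. eapply disc_S_isMat; eauto.
  - destruct HD as (A & C & HA & HC & ->). exists A, (mmul n C B).
    split; auto. split. apply IHk; auto. apply mmul_assoc.
Qed.

Lemma disc_closed n M (Tm : R -> Prop) (S : R -> Mat -> Prop) :
  (forall t, Tm t <-> exists k : nat, t = INR k) ->
  (forall t B, S t B <-> exists k : nat, t = INR k /\ disc_S n M k B) ->
  approx_closed n Tm S.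
Proof.
  intros HT HS. apply approx_closed_of_closed. intros t s D B _ _ HD HB.
  apply HS in HD, HB. destruct HD as (k & -> & HD). destruct HB as (l & -> & HB).
  rewrite <- plus_INR. split. apply HT; eauto. apply HS. eauto using disc_S_mul.
Qed.

(** * The matrix exponential *)

Lemma inv_fact_pos k : 0 < / INR (Factorial.fact k).
Proof. apply Rinv_0_lt_compat, lt_0_INR, Factorial.lt_O_fact. Qed.

Lemma exp_series x :
  Un_cv (fun N => fsum (S N) (fun k => / INR (Factorial.fact k) * x ^ k)) (exp x).
Proof.
  unfold exp. destruct (exist_exp x) as [l Hl]. cbn [proj1_sig]. intros e He.
  destruct (Hl e He) as [N HN]. exists N. intros m Hm. rewrite fsum_S_sum. apply HN; auto.
Qed.

Lemma exp_partial_le x N : 0 <= x -> fsum N (fun k => / INR (Factorial.fact k) * x ^ k) <= exp x.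
Proof.
  intros Hx. apply (cv_ge _ _ _ N (exp_series x)). intros M HM. apply fsum_mono; [| lia].
  intros k _. apply Rmult_le_pos. left; apply inv_fact_pos. apply pow_le; auto.
Qed.

Lemma series_dominated_cv (a : nat -> R) c x : 0 <= c ->
  (forall k, Rabs (a k) <= c * (/ INR (Factorial.fact k) * x ^ k)) ->
  exists l, Un_cv (fun N => fsum (S N) a) l.
Proof.
  intros Hc Ha.
  set (b := fun k => c * (/ INR (Factorial.fact k) * x ^ k)).
  assert (Hsig : forall (u : nat -> R) l, Un_cv (fun N => fsum (S N) u) l ->
                   {l | Un_cv (fun N => sum_f_R0 u N) l}).
  { intros u l H. exists l. apply (Un_cv_ext (fun N => fsum (S N) u)); auto.
    intros; apply fsum_S_sum. }
  assert (Hb : Un_cv (fun N => fsum (S N) b) (c * exp x)).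
  { apply (Un_cv_ext (fun N => c * fsum (S N) (fun k => / INR (Factorial.fact k) * x ^ k))).
    intros; unfold b; rewrite fsum_scal; auto. apply CV_mult. apply Un_cv_const. apply exp_series. }
  assert (Hb2 : Un_cv (fun N => fsum (S N) (fun k => 2 * b k)) (2 * (c * exp x))).
  { apply (Un_cv_ext (fun N => 2 * fsum (S N) b)). intros; rewrite fsum_scal; auto.
    apply CV_mult. apply Un_cv_const. auto. }
  (* |a| + a and |a| are nonnegative series dominated by 2b and b *)
  destruct (Rseries_CV_comp (fun k => Rabs (a k) + a k) (fun k => 2 * b k)) as [lp Hp].
  { intros k. specialize (Ha k). fold (b k) in Ha. pose proof (Rle_abs (a k)).
    pose proof (Rle_abs (- a k)). rewrite Rabs_Ropp in *. lra. }
  { eapply Hsig; eauto. }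
  destruct (Rseries_CV_comp (fun k => Rabs (a k)) b) as [lq Hq].
  { intros k. split. apply Rabs_pos. apply Ha. }
  { eapply Hsig; eauto. }
  exists (lp - lq).
  apply (Un_cv_ext (fun N => sum_f_R0 (fun k => Rabs (a k) + a k) N - sum_f_R0 (fun k => Rabs (a k)) N)).
  - intros N. rewrite <- !fsum_S_sum, <- fsum_minus. apply fsum_ext; intros; lra.
  - apply CV_minus; auto.
Qed.

Lemma mpow_isMat n A k : isMat n (mpow n A k).
Proof. destruct k; simpl. apply mid_isMat. apply mmul_isMat. Qed.

Lemma mpow_entry n A k i j : Rabs (mpow n A k i j) <= INR n * mnorm n A ^ k.
Proof.
  eapply Rle_trans. apply entry_le_mnorm, mpow_isMat.
  induction k; simpl. rewrite mnorm_mid. lra.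
  eapply Rle_trans. apply mnorm_mul. pose proof (mnorm_nonneg n A). nra.
Qed.

Lemma mpow_scale n u A k : mpow n (mscale n u A) k = mscale n (u ^ k) (mpow n A k).
Proof.
  induction k; simpl; apply functional_extensionality; intro i;
    apply functional_extensionality; intro j.
  - unfold mscale. pose proof (mid_isMat n i j) as Hid.
    destruct (Nat.ltb_spec i n); destruct (Nat.ltb_spec j n); simpl; try lra; rewrite Hid; auto; lia.
  - rewrite IHk. unfold mmul, mscale.
    destruct (Nat.ltb_spec i n); destruct (Nat.ltb_spec j n); simpl; try lra.
    rewrite <- fsum_scal. apply fsum_ext; intros l Hl. destruct (Nat.ltb_spec l n); try lia. simpl. ring.
Qed.

Definition eterm n A u i j k := / INR (Factorial.fact k) * mpow n (mscale n u A) k i j.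

Lemma eterm_eq n A u i j k :
  eterm n A u i j k = / INR (Factorial.fact k) * (u ^ k *
    (if andb (Nat.ltb i n) (Nat.ltb j n) then mpow n A k i j else 0)).
Proof. unfold eterm. rewrite mpow_scale. unfold mscale. destruct (andb _ _); ring. Qed.

Lemma mpow_entry_cut n A k i j :
  Rabs (if andb (Nat.ltb i n) (Nat.ltb j n) then mpow n A k i j else 0) <= INR n * mnorm n A ^ k.
Proof.
  destruct (andb _ _). apply mpow_entry. rewrite Rabs_R0.
  apply Rmult_le_pos. apply pos_INR. apply pow_le, mnorm_nonneg.
Qed.

Lemma mexp_spec n A u i j :
  Un_cv (fun N => fsum (S N) (eterm n A u i j)) (mexp n (mscale n u A) i j).
Proof.
  destruct (series_dominated_cv (eterm n A u i j) (INR n) (Rabs u * mnorm n A)) as [l Hl].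
  - apply pos_INR.
  - intros k. rewrite eterm_eq, Rabs_mult, Rabs_pos_eq by (left; apply inv_fact_pos).
    rewrite Rabs_mult, <- RPow_abs, Rpow_mult_distr.
    pose proof (mpow_entry_cut n A k i j). pose proof (inv_fact_pos k).
    assert (0 <= Rabs u ^ k) by (apply pow_le; apply Rabs_pos).
    pose proof (Rabs_pos (if andb (Nat.ltb i n) (Nat.ltb j n) then mpow n A k i j else 0)).
    assert (Rabs u ^ k * Rabs (if andb (Nat.ltb i n) (Nat.ltb j n) then mpow n A k i j else 0)
            <= Rabs u ^ k * (INR n * mnorm n A ^ k)) by (apply Rmult_le_compat_l; auto).
    nra.
  - unfold mexp, Rlim. apply (epsilon_spec (inhabits 0) (fun l => Un_cv _ l)). exists l. exact Hl.
Qed.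

Lemma pow_diff u v Rb k : Rabs u <= Rb -> Rabs v <= Rb ->
  Rabs (u ^ k - v ^ k) <= INR k * Rb ^ (pred k) * Rabs (u - v).
Proof.
  intros Hu Hv. induction k.
  - simpl. rewrite Rminus_diag, Rabs_R0. lra.
  - replace (u ^ S k - v ^ S k) with (u * (u ^ k - v ^ k) + v ^ k * (u - v)) by (simpl; ring).
    eapply Rle_trans. apply Rabs_triang. rewrite !Rabs_mult.
    assert (HRb : 0 <= Rb) by (pose proof (Rabs_pos u); lra).
    assert (Rabs (v ^ k) <= Rb ^ k).
    { rewrite <- RPow_abs. apply pow_maj_Rabs. rewrite Rabs_Rabsolu. auto. }
    assert (Rabs u * Rabs (u ^ k - v ^ k) <= Rb * (INR k * Rb ^ pred k * Rabs (u - v))).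
    { apply Rmult_le_compat; auto; apply Rabs_pos. }
    assert (Rabs (v ^ k) * Rabs (u - v) <= Rb ^ k * Rabs (u - v)).
    { apply Rmult_le_compat_r; auto. apply Rabs_pos. }
    assert (Rb * (INR k * Rb ^ pred k * Rabs (u - v)) = INR k * Rb ^ k * Rabs (u - v)).
    { destruct k; simpl; ring. }
    rewrite S_INR. simpl pred. lra.
Qed.

Lemma deriv_series_bound Rb al N : 0 <= Rb -> 0 <= al ->
  fsum (S N) (fun k => / INR (Factorial.fact k) * INR k * Rb ^ (pred k) * al ^ k)
  <= al * exp (Rb * al).
Proof.
  intros HR Ha. rewrite fsum_shift. simpl INR at 2.
  rewrite Rmult_0_r, Rmult_0_l, Rmult_0_l, Rplus_0_l.
  replace (fsum N (fun j => / INR (Factorial.fact (S j)) * INR (S j) * Rb ^ pred (S j) * al ^ S j))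
    with (al * fsum N (fun j => / INR (Factorial.fact j) * (Rb * al) ^ j)).
  - apply Rmult_le_compat_l; auto. apply exp_partial_le. nra.
  - rewrite <- fsum_scal. apply fsum_ext; intros j _. rewrite fact_simpl, mult_INR.
    simpl pred. rewrite Rpow_mult_distr. simpl pow. field.
    split. apply INR_fact_neq_0. apply not_0_INR. lia.
Qed.

Lemma mexp_lip n A u v Rb i j : Rabs u <= Rb -> Rabs v <= Rb ->
  Rabs (mexp n (mscale n u A) i j - mexp n (mscale n v A) i j)
  <= Rabs (u - v) * (INR n * mnorm n A * exp (Rb * mnorm n A)).
Proof.
  intros Hu Hv. assert (HRb : 0 <= Rb) by (pose proof (Rabs_pos u); lra).
  pose proof (mnorm_nonneg n A) as Hal. set (al := mnorm n A) in *.
  apply (cv_le_const (fun N => Rabs (fsum (S N) (eterm n A u i j) - fsum (S N) (eterm n A v i j)))).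
  { apply cv_cvabs. apply CV_minus; apply mexp_spec. }
  intros N. rewrite <- fsum_minus. eapply Rle_trans. apply fsum_abs.
  apply Rle_trans with (fsum (S N) (fun k => (Rabs (u - v) * INR n) *
                                   (/ INR (Factorial.fact k) * INR k * Rb ^ (pred k) * al ^ k))).
  - apply fsum_le. intros k _. rewrite !eterm_eq.
    set (E := if andb (Nat.ltb i n) (Nat.ltb j n) then mpow n A k i j else 0).
    replace (/ INR (Factorial.fact k) * (u ^ k * E) - / INR (Factorial.fact k) * (v ^ k * E))
      with (/ INR (Factorial.fact k) * ((u ^ k - v ^ k) * E)) by ring.
    pose proof (inv_fact_pos k).
    rewrite Rabs_mult, (Rabs_pos_eq (/ _)), Rabs_mult by lra.
    pose proof (pow_diff u v Rb k Hu Hv). pose proof (mpow_entry_cut n A k i j). fold E al in H1.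
    pose proof (Rabs_pos (u ^ k - v ^ k)). pose proof (Rabs_pos E).
    assert (Rabs (u ^ k - v ^ k) * Rabs E <= (INR k * Rb ^ pred k * Rabs (u - v)) * (INR n * al ^ k))
      by (apply Rmult_le_compat; auto).
    replace (Rabs (u - v) * INR n * (/ INR (Factorial.fact k) * INR k * Rb ^ pred k * al ^ k))
      with (/ INR (Factorial.fact k) * ((INR k * Rb ^ pred k * Rabs (u - v)) * (INR n * al ^ k)))
      by ring.
    apply Rmult_le_compat_l; lra.
  - rewrite fsum_scal. pose proof (deriv_series_bound Rb al N HRb Hal).
    pose proof (Rabs_pos (u - v)). pose proof (pos_INR n).
    replace (Rabs (u - v) * (INR n * al * exp (Rb * al)))
      with (Rabs (u - v) * INR n * (al * exp (Rb * al))) by ring.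
    apply Rmult_le_compat_l; auto. nra.
Qed.

Lemma mexp_cv n A (us : nat -> R) u Rb i j :
  (forall m, Rabs (us m) <= Rb) -> Rabs u <= Rb -> Un_cv us u ->
  Un_cv (fun m => mexp n (mscale n (us m) A) i j) (mexp n (mscale n u A) i j).
Proof.
  intros Hus Hu Hcv e He. set (C := INR n * mnorm n A * exp (Rb * mnorm n A) + 1).
  assert (HC : 0 < C).
  { unfold C. pose proof (pos_INR n). pose proof (mnorm_nonneg n A).
    pose proof (exp_pos (Rb * mnorm n A)). assert (0 <= INR n * mnorm n A) by nra. nra. }
  destruct (Hcv (e / C)) as [N HN]. apply Rdiv_lt_0_compat; auto. exists N. intros m Hm.
  specialize (HN m Hm). unfold Rdist in *.
  eapply Rle_lt_trans. apply (mexp_lip n A (us m) u Rb i j); auto.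
  assert (Rabs (us m - u) * C < e).
  { apply Rmult_lt_reg_r with (/ C). apply Rinv_0_lt_compat; auto.
    replace (Rabs (us m - u) * C * / C) with (Rabs (us m - u)) by (field; lra). auto. }
  unfold C in H. pose proof (Rabs_pos (us m - u)). nra.
Qed.

(** * (C) Switched semigroups with jumps *)

Lemma jprod_ext n tk tk' Am Am' Pm Pm' k :
  (forall l, (l <= k)%nat -> tk l = tk' l) ->
  (forall l, (l < k)%nat -> Am l = Am' l /\ Pm l = Pm' l) ->
  jprod n tk Am Pm k = jprod n tk' Am' Pm' k.
Proof.
  induction k; intros H1 H2; simpl; auto.
  rewrite IHk by (intros; try apply H1; try apply H2; lia).
  rewrite (H1 (S k)), (H1 k) by lia. destruct (H2 k ltac:(lia)) as [-> ->]. auto.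
Qed.

Lemma jprod_S n tk Am Pm l : jprod n tk Am Pm (S l) =
  mmul n (mmul n (mexp n (mscale n (tk (S l) - tk l) (Am l))) (Pm l)) (jprod n tk Am Pm l).
Proof. reflexivity. Qed.

Definition jump_value n (tk : nat -> R) (Am Pm : nat -> Mat) (k : nat) (s : R) : Mat :=
  mmul n (mmul n (mexp n (mscale n (s - tk k) (Am k))) (Pm k)) (jprod n tk Am Pm k).

Lemma jump_isMat n M t B : jump_S n M t B -> isMat n B.
Proof.
  intros [[_ ->] | [_ (tk & Am & Pm & k & _ & _ & _ & _ & _ & ->)]].
  apply mid_isMat. apply mmul_isMat.
Qed.

(* Concatenation of switching data: the first k+1 intervals of (tk, Am)
   followed, from time s on, by the shifted data (s + tk', Am'). *)
Definition catT (tk : nat -> R) k s (tk' : nat -> R) : nat -> R :=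
  fun l => if Nat.leb l k then tk l else s + tk' (l - S k)%nat.
Definition catM (Am : nat -> Mat) k (Am' : nat -> Mat) : nat -> Mat :=
  fun l => if Nat.leb l k then Am l else Am' (l - S k)%nat.

Lemma catT_le tk k s tk' l : (l <= k)%nat -> catT tk k s tk' l = tk l.
Proof. intros H. unfold catT. destruct (Nat.leb_spec l k); auto; lia. Qed.
Lemma catT_gt tk k s tk' j : catT tk k s tk' (S k + j) = s + tk' j.
Proof.
  unfold catT. destruct (Nat.leb_spec (S k + j) k); try lia.
  replace (S k + j - S k)%nat with j by lia. auto.
Qed.
Lemma catM_le Am k Am' l : (l <= k)%nat -> catM Am k Am' l = Am l.
Proof. intros H. unfold catM. destruct (Nat.leb_spec l k); auto; lia. Qed.
Lemma catM_gt Am k Am' j : catM Am k Am' (S k + j) = Am' j.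
Proof.
  unfold catM. destruct (Nat.leb_spec (S k + j) k); try lia.
  replace (S k + j - S k)%nat with j by lia. auto.
Qed.

Lemma jprod_cat n tk Am Pm k s tk' Am' Pm' : tk' 0%nat = 0 -> forall m,
  jprod n (catT tk k s tk') (catM Am k Am') (catM Pm k Pm') (S k + m)
  = mmul n (jprod n tk' Am' Pm' m) (jump_value n tk Am Pm k s).
Proof.
  intros H0 m. induction m.
  - rewrite Nat.add_0_r. simpl jprod at 2. rewrite mid_l by apply mmul_isMat.
    simpl jprod. unfold jump_value.
    rewrite (jprod_ext n (catT tk k s tk') tk (catM Am k Am') Am (catM Pm k Pm') Pm k).
    2:{ intros; apply catT_le; auto. } 2:{ intros; rewrite !catM_le by lia; auto. }
    assert (E : catT tk k s tk' (S k) = s + tk' 0%nat)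
      by (rewrite <- (catT_gt tk k s tk' 0); f_equal; lia).
    rewrite E, H0, Rplus_0_r, catT_le, catM_le, catM_le by lia. auto.
  - replace (S k + S m)%nat with (S (S k + m)) by lia. rewrite jprod_S, IHm.
    replace (S (S k + m)) with (S k + S m)%nat by lia.
    rewrite catT_gt, catT_gt, catM_gt, catM_gt.
    replace (s + tk' (S m) - (s + tk' m)) with (tk' (S m) - tk' m) by ring.
    rewrite (jprod_S n tk' Am' Pm' m), !mmul_assoc. auto.
Qed.

(* If s lies strictly inside a switching interval of B, then D B is again
   the value of a switched system (the concatenated one) at time t + s. *)
Lemma jump_mul n M t D s tk Am Pm k : 0 < t -> jump_S n M t D ->
  tk 0%nat = 0 -> (forall l, tk l < tk (S l)) -> (forall T, exists l, T < tk l) ->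
  (forall l, M (Am l) (Pm l)) -> tk k < s -> s < tk (S k) ->
  jump_S n M (t + s) (mmul n D (jump_value n tk Am Pm k s)).
Proof.
  intros Ht HD H0 Hinc Hunb HM Hk1 Hk2.
  destruct HD as [[Ht0 _] | [_ (tk' & Am' & Pm' & m & H0' & Hinc' & Hunb' & HM' & [Hm1 Hm2] & ->)]].
  lra.
  assert (Hs : 0 < s).
  { assert (tk 0%nat <= tk k) by (clear -Hinc; induction k; [lra | specialize (Hinc k); lra]). lra. }
  right. split. lra.
  exists (catT tk k s tk'), (catM Am k Am'), (catM Pm k Pm'), (S k + m)%nat.
  split; [| split; [| split; [| split; [| split]]]].
  - rewrite catT_le by lia; auto.
  - intros l. destruct (Nat.le_gt_cases (S l) k).
    + rewrite !catT_le by lia. auto.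
    + destruct (Nat.eq_dec l k).
      * subst. rewrite catT_le by lia. replace (S k) with (S k + 0)%nat by lia.
        rewrite catT_gt, H0'. lra.
      * replace l with (S k + (l - S k))%nat by lia.
        replace (S (S k + (l - S k))) with (S k + S (l - S k))%nat by lia.
        rewrite !catT_gt. specialize (Hinc' (l - S k)%nat). lra.
  - intros T. destruct (Hunb' (T - s)) as [l Hl]. exists (S k + l)%nat. rewrite catT_gt. lra.
  - intros l. destruct (Nat.le_gt_cases l k). rewrite !catM_le by lia. auto.
    replace l with (S k + (l - S k))%nat by lia. rewrite !catM_gt. auto.
  - rewrite catT_gt. replace (S (S k + m)) with (S k + S m)%nat by lia. rewrite catT_gt. lra.
  - rewrite catT_gt, catM_gt, catM_gt, jprod_cat by auto.
    replace (t + s - (s + tk' m)) with (t - tk' m) by ring. rewrite !mmul_assoc. auto.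
Qed.

Definition shift_switch (tk : nat -> R) (k1 : nat) (d : R) : nat -> R :=
  fun l => if Nat.eqb l (S k1) then tk (S k1) - d else tk l.

Lemma shift_switch_valid tk k1 d : tk 0%nat = 0 -> (forall l, tk l < tk (S l)) ->
  (forall T, exists l, T < tk l) -> 0 < d < tk (S k1) - tk k1 ->
  let tk' := shift_switch tk k1 d in
  tk' 0%nat = 0 /\ (forall l, tk' l < tk' (S l)) /\ (forall T, exists l, T < tk' l) /\
  tk' (S k1) < tk (S k1) /\ tk' (S (S k1)) = tk (S (S k1)).
Proof.
  intros H0 Hinc Hunb Hd tk'. unfold tk', shift_switch. split; [| split; [| split; [| split]]].
  - simpl. auto.
  - intros l. destruct (Nat.eqb_spec l (S k1)); destruct (Nat.eqb_spec (S l) (S k1)); try lia.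
    + subst. specialize (Hinc (S k1)). lra.
    + assert (l = k1) by lia. subst. lra.
    + auto.
  - intros T. destruct (Hunb T) as [l Hl]. destruct (Nat.eq_dec l (S k1)).
    + exists (S (S k1)). destruct (Nat.eqb_spec (S (S k1)) (S k1)); try lia.
      subst. specialize (Hinc (S k1)). lra.
    + exists l. destruct (Nat.eqb_spec l (S k1)); try lia. auto.
  - rewrite Nat.eqb_refl. lra.
  - destruct (Nat.eqb_spec (S (S k1)) (S k1)); try lia. auto.
Qed.

Lemma jump_value_shift n tk Am Pm k1 d :
  jump_value n (shift_switch tk k1 d) Am Pm (S k1) (tk (S k1)) =
  mmul n (mmul n (mexp n (mscale n d (Am (S k1)))) (Pm (S k1)))
    (mmul n (mmul n (mexp n (mscale n (tk (S k1) - tk k1 - d) (Am k1))) (Pm k1))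
       (jprod n tk Am Pm k1)).
Proof.
  unfold jump_value. rewrite jprod_S.
  rewrite (jprod_ext n (shift_switch tk k1 d) tk Am Am Pm Pm k1).
  2:{ intros l Hl. unfold shift_switch. destruct (Nat.eqb_spec l (S k1)); try lia; auto. }
  2:{ auto. }
  unfold shift_switch. rewrite Nat.eqb_refl. destruct (Nat.eqb_spec k1 (S k1)); try lia.
  replace (tk (S k1) - (tk (S k1) - d)) with d by ring.
  replace (tk (S k1) - d - tk k1) with (tk (S k1) - tk k1 - d) by ring. reflexivity.
Qed.

(* If s = tk k is a switching time, the value at s is a limit of values of
   systems whose k-th switch happens slightly before s. *)
Lemma jump_approx n s tk Am Pm k : 0 < s -> tk 0%nat = 0 -> (forall l, tk l < tk (S l)) ->
  (forall T, exists l, T < tk l) -> tk k = s ->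
  exists tks : nat -> nat -> R,
    (forall m, tks m 0%nat = 0 /\ (forall l, tks m l < tks m (S l)) /\
       (forall T, exists l, T < tks m l) /\ tks m k < s /\ tks m (S k) = tk (S k)) /\
    forall i j, (i < n)%nat -> (j < n)%nat ->
      Un_cv (fun m => jump_value n (tks m) Am Pm k s i j) (jump_value n tk Am Pm k s i j).
Proof.
  intros Hs H0 Hinc Hunb Hk.
  destruct k as [| k1]. lra. subst s.
  set (L := tk (S k1) - tk k1). assert (HL : 0 < L) by (unfold L; specialize (Hinc k1); lra).
  set (dl := fun m : nat => L / (INR m + 2)).
  assert (Hdl : forall m, 0 < dl m < L).
  { intros m. unfold dl. pose proof (pos_INR m). split. apply Rdiv_lt_0_compat; lra.
    apply Rmult_lt_reg_r with (INR m + 2). lra.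
    replace (L / (INR m + 2) * (INR m + 2)) with L by (field; lra). nra. }
  assert (Hdcv : Un_cv dl 0).
  { apply (Un_cv_squeeze0 dl (fun m => L * / (INR m + 1))).
    - intros m. specialize (Hdl m). split. lra. unfold dl, Rdiv. apply Rmult_le_compat_l. lra.
      apply Rinv_le_contravar. pose proof (pos_INR m); lra. lra.
    - replace 0 with (L * 0) by ring. apply CV_mult. apply Un_cv_const. exact RinvN_cv. }
  exists (fun m => shift_switch tk k1 (dl m)). split.
  - intros m. apply shift_switch_valid; auto.
  - intros i j Hi Hj.
    apply (Un_cv_ext (fun m => mmul n (mmul n (mexp n (mscale n (dl m) (Am (S k1)))) (Pm (S k1)))
             (mmul n (mmul n (mexp n (mscale n (L - dl m) (Am k1))) (Pm k1)) (jprod n tk Am Pm k1)) i j)).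
    { intros m. rewrite jump_value_shift. auto. }
    replace (jump_value n tk Am Pm (S k1) (tk (S k1))) with
      (mmul n (mmul n (mexp n (mscale n 0 (Am (S k1)))) (Pm (S k1)))
         (mmul n (mmul n (mexp n (mscale n L (Am k1))) (Pm k1)) (jprod n tk Am Pm k1)))
      by (unfold jump_value; rewrite jprod_S, Rminus_diag; reflexivity).
    revert i j Hi Hj. repeat apply mmul_cv; intros; try apply Un_cv_const.
    + apply (mexp_cv n _ dl 0 L). intros m; specialize (Hdl m); rewrite Rabs_pos_eq; lra.
      rewrite Rabs_R0; lra. auto.
    + apply (mexp_cv n _ (fun m => L - dl m) L L).
      * intros m; specialize (Hdl m); rewrite Rabs_pos_eq; lra.
      * rewrite Rabs_pos_eq; lra.
      * assert (HH : Un_cv (fun m => L - dl m) (L - 0)) by (apply CV_minus; [apply Un_cv_const | auto]).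
        rewrite Rminus_0_r in HH. exact HH.
Qed.

Lemma jump_closed n M (Tm : R -> Prop) (S : R -> Mat -> Prop) :
  (forall t, Tm t <-> 0 <= t) -> (forall t B, S t B <-> 0 <= t /\ jump_S n M t B) ->
  approx_closed n Tm S.
Proof.
  intros HT HS t s D B Ht Hs HD HB. apply HT in Ht, Hs. apply HS in HD, HB.
  destruct HD as [_ HD]. destruct HB as [_ HB].
  split. apply HT. lra.
  (* degenerate cases: one of the factors is the identity at time 0 *)
  destruct (Rle_lt_or_eq_dec _ _ Hs) as [Hs' | Hs'].
  2:{ subst. destruct HB as [[_ ->] | [HH _]]; [| lra]. exists (fun _ => D). split.
      - intros _. apply HS. rewrite Rplus_0_r. auto.
      - intros; rewrite mid_r. apply Un_cv_const. eapply jump_isMat; eauto. }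
  destruct (Rle_lt_or_eq_dec _ _ Ht) as [Ht' | Ht'].
  2:{ subst. destruct HD as [[_ ->] | [HH _]]; [| lra]. exists (fun _ => B). split.
      - intros _. apply HS. rewrite Rplus_0_l. auto.
      - intros; rewrite mid_l. apply Un_cv_const. eapply jump_isMat; eauto. }
  destruct HB as [[HH _] | [_ (tk & Am & Pm & k & H0 & Hinc & Hunb & HM & [Hk1 Hk2] & ->)]]; [lra |].
  fold (jump_value n tk Am Pm k s).
  destruct (Rle_lt_or_eq_dec _ _ Hk1) as [Hk1' | Hk1'].
  - exists (fun _ => mmul n D (jump_value n tk Am Pm k s)). split.
    + intros _. apply HS. split. lra. apply jump_mul; auto.
    + intros; apply Un_cv_const.
  - destruct (jump_approx n s tk Am Pm k Hs' H0 Hinc Hunb Hk1') as [tks [Htks Hcv]].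
    exists (fun m => mmul n D (jump_value n (tks m) Am Pm k s)). split.
    + intros m. destruct (Htks m) as (A1 & A2 & A3 & A4 & A5). apply HS. split. lra.
      apply jump_mul; auto. rewrite A5. auto.
    + apply mmul_cv; auto. intros; apply Un_cv_const.
Qed.

(** * (B) Continuous semigroups *)

Lemma outer_mono (A B : R -> Prop) r : (forall x, A x -> B x) -> outer_le B r -> outer_le A r.
Proof. intros H HB e He. destruct (HB e He) as (a & b & H1 & H2 & H3). exists a, b. split; auto. Qed.

(* Interleaving two sequences, to merge two countable interval covers. *)
Definition interleave (f g : nat -> R) (k : nat) : R :=
  if Nat.even k then f (Nat.div2 k) else g (Nat.div2 k).

Lemma interleave_even f g k : interleave f g (2 * k) = f k.
Proof. unfold interleave. rewrite Nat.even_mul, Nat.div2_double. auto. Qed.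

Lemma interleave_odd f g k : interleave f g (S (2 * k)) = g k.
Proof.
  unfold interleave. rewrite Nat.even_succ, <- Nat.negb_even, Nat.even_mul, Nat.div2_succ_double.
  auto.
Qed.

Lemma fsum_interleave m F G : fsum (2 * m) (interleave F G) = fsum m F + fsum m G.
Proof.
  induction m. simpl. lra. replace (2 * S m)%nat with (S (S (2 * m))) by lia. cbn [fsum].
  rewrite IHm, interleave_odd, interleave_even. lra.
Qed.

Lemma outer_union A B r1 r2 : outer_le A r1 -> outer_le B r2 ->
  outer_le (fun x => A x \/ B x) (r1 + r2).
Proof.
  intros HA HB e He. destruct (HA (e / 2)) as (a & b & H1 & H2 & H3). lra.
  destruct (HB (e / 2)) as (a' & b' & H1' & H2' & H3'). lra.
  exists (interleave a a'), (interleave b b'). split; [| split].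
  - intros k. unfold interleave. destruct (Nat.even k); auto.
  - intros x [Hx | Hx].
    + destruct (H2 x Hx) as [k Hk]. exists (2 * k)%nat. rewrite !interleave_even. auto.
    + destruct (H2' x Hx) as [k Hk]. exists (S (2 * k)). rewrite !interleave_odd. auto.
  - intros m. apply Rle_trans with (fsum (2 * m) (fun k => interleave b b' k - interleave a a' k)).
    + apply fsum_mono; [| lia]. intros k _. unfold interleave.
      destruct (Nat.even k); [specialize (H1 (Nat.div2 k)) | specialize (H1' (Nat.div2 k))]; lra.
    + replace (fsum (2 * m) (fun k => interleave b b' k - interleave a a' k))
        with (fsum (2 * m) (interleave (fun j => b j - a j) (fun j => b' j - a' j))).
      * rewrite fsum_interleave. specialize (H3 m). specialize (H3' m). lra.
      * apply fsum_ext. intros k _. unfold interleave. destruct (Nat.even k); auto.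
Qed.

Lemma outer_shift A r s : outer_le A r -> outer_le (fun x => A (x - s)) r.
Proof.
  intros HA e He. destruct (HA e He) as (a & b & H1 & H2 & H3).
  exists (fun k => a k + s), (fun k => b k + s). split; [| split].
  - intros k; specialize (H1 k); lra.
  - intros x Hx. destruct (H2 _ Hx) as [k Hk]. exists k. lra.
  - intros m. eapply Rle_trans; [| apply (H3 m)]. right. apply fsum_ext. intros; ring.
Qed.

Lemma outer_point s : outer_le (fun x => x = s) 0.
Proof.
  intros e He. exists (fun _ => s), (fun _ => s). split; [| split].
  - intros; lra.
  - intros x Hx. exists 0%nat. lra.
  - intros m. replace (fsum m (fun _ => s - s)) with (fsum m (fun _ => 0)).
    + rewrite fsum_zero. lra.
    + apply fsum_ext; intros; ring.
Qed.

Lemma null_union A B : null_set A -> null_set B -> null_set (fun x => A x \/ B x).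
Proof. intros HA HB. unfold null_set. replace 0 with (0 + 0) by ring. apply outer_union; auto. Qed.

Lemma meas_ext E E' : (forall x, E x <-> E' x) -> leb_measurable E -> leb_measurable E'.
Proof.
  intros H HE A r Hr. destruct (HE A r Hr) as (r1 & r2 & H1 & H2 & H3).
  exists r1, r2. split; [| split; auto].
  - apply (outer_mono _ _ r1 (fun x Hx => conj (proj1 Hx) (proj2 (H x) (proj2 Hx))) H1).
  - apply (outer_mono _ _ r2 (fun x Hx => conj (proj1 Hx) (fun HE' => proj2 Hx (proj1 (H x) HE'))) H2).
Qed.

Lemma meas_compl E : leb_measurable E -> leb_measurable (fun x => ~ E x).
Proof.
  intros HE A r Hr. destruct (HE A r Hr) as (r1 & r2 & H1 & H2 & H3).
  exists r2, r1. split; [| split]; auto.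
  - apply (outer_mono _ (fun x => A x /\ E x) r1); auto. intros x [Hx Hn]. split; auto. apply NNPP; auto.
  - lra.
Qed.

Lemma meas_union E F : leb_measurable E -> leb_measurable F -> leb_measurable (fun x => E x \/ F x).
Proof.
  intros HE HF A r Hr. destruct (HE A r Hr) as (r1 & r2 & H1 & H2 & H3).
  destruct (HF (fun x => A x /\ ~ E x) r2 H2) as (r3 & r4 & H4 & H5 & H6).
  exists (r1 + r3), r4. split; [| split].
  - apply (outer_mono _ (fun x => (A x /\ E x) \/ ((A x /\ ~ E x) /\ F x))).
    + intros x [Hx [HEx | HFx]]. left; auto. destruct (classic (E x)); [left | right]; auto.
    + apply outer_union; auto.
  - apply (outer_mono _ (fun x => (A x /\ ~ E x) /\ ~ F x) r4); auto.
    intros x [Hx Hn]. split; [split |]; auto.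
  - lra.
Qed.

Lemma meas_inter E F : leb_measurable E -> leb_measurable F -> leb_measurable (fun x => E x /\ F x).
Proof.
  intros HE HF. apply (meas_ext (fun x => ~ (~ E x \/ ~ F x))).
  - intros x. split.
    + intros H. split; apply NNPP; intros Hn; apply H; auto.
    + intros [H1 H2] [H | H]; auto.
  - apply meas_compl, meas_union; apply meas_compl; auto.
Qed.

Lemma meas_null N : null_set N -> leb_measurable N.
Proof.
  intros HN A r Hr. exists 0, r. split; [| split].
  - apply (outer_mono _ N); auto. intros x [_ H]; auto.
  - apply (outer_mono _ A); auto. intros x [H _]; auto.
  - lra.
Qed.

Lemma meas_shift E s : leb_measurable E -> leb_measurable (fun x => E (x - s)).
Proof.
  intros HE A r Hr.
  assert (Hr' : outer_le (fun y => A (y + s)) r).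
  { apply (outer_mono _ (fun y => A (y - - s))).
    - intros y Hy. replace (y - - s) with (y + s) by ring. auto.
    - apply (outer_shift A); auto. }
  destruct (HE _ r Hr') as (r1 & r2 & H1 & H2 & H3). exists r1, r2. split; [| split]; auto.
  - apply (outer_mono _ (fun x => (fun y => A (y + s) /\ E y) (x - s))).
    + intros x [Hx HEx]. split; auto. replace (x - s + s) with x by ring. auto.
    + apply (outer_shift (fun y => A (y + s) /\ E y)); auto.
  - apply (outer_mono _ (fun x => (fun y => A (y + s) /\ ~ E y) (x - s))).
    + intros x [Hx HEx]. split; auto. replace (x - s + s) with x by ring. auto.
    + apply (outer_shift (fun y => A (y + s) /\ ~ E y)); auto.
Qed.

Lemma ac_const t c : abs_cont_on t (fun _ => c).
Proof.
  intros e He. exists 1. split. lra. intros m a b _ _ _.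
  replace (fsum m (fun k => Rabs (c - c))) with (fsum m (fun _ => 0)).
  - rewrite fsum_zero. auto.
  - apply fsum_ext; intros. rewrite Rminus_diag, Rabs_R0. auto.
Qed.

Lemma ac_plus t f g : abs_cont_on t f -> abs_cont_on t g -> abs_cont_on t (fun v => f v + g v).
Proof.
  intros Hf Hg e He. destruct (Hf (e / 2)) as [d1 [Hd1 H1]]. lra.
  destruct (Hg (e / 2)) as [d2 [Hd2 H2]]. lra.
  exists (Rmin d1 d2). split. apply Rmin_glb_lt; auto. intros m a b Ha Hb Hs.
  pose proof (Rmin_l d1 d2). pose proof (Rmin_r d1 d2).
  specialize (H1 m a b Ha Hb ltac:(lra)). specialize (H2 m a b Ha Hb ltac:(lra)).
  eapply Rle_lt_trans.
  - apply (fsum_le _ _ (fun k => Rabs (f (b k) - f (a k)) + Rabs (g (b k) - g (a k)))).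
    intros k _. replace (f (b k) + g (b k) - (f (a k) + g (a k)))
      with ((f (b k) - f (a k)) + (g (b k) - g (a k))) by ring. apply Rabs_triang.
  - rewrite fsum_plus. lra.
Qed.

Lemma ac_mulc t f c : abs_cont_on t f -> abs_cont_on t (fun v => f v * c).
Proof.
  intros Hf e He. pose proof (Rabs_pos c) as Hc.
  destruct (Hf (e / (Rabs c + 1))) as [d [Hd Hsmall]]. apply Rdiv_lt_0_compat; lra.
  exists d. split; auto. intros m a b Ha Hb Hs. specialize (Hsmall m a b Ha Hb Hs).
  replace (fsum m (fun k => Rabs (f (b k) * c - f (a k) * c)))
    with (Rabs c * fsum m (fun k => Rabs (f (b k) - f (a k)))).
  - assert (Rabs c * (e / (Rabs c + 1)) < e).
    { apply Rmult_lt_reg_r with (Rabs c + 1). lra.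
      replace (Rabs c * (e / (Rabs c + 1)) * (Rabs c + 1)) with (Rabs c * e) by (field; lra). nra. }
    assert (0 <= fsum m (fun k => Rabs (f (b k) - f (a k)))) by (apply fsum_nonneg; intros; apply Rabs_pos).
    nra.
  - rewrite <- fsum_scal. apply fsum_ext; intros. rewrite <- Rabs_mult. f_equal. ring.
Qed.

Lemma ac_fsum t m (F : nat -> R -> R) : (forall k, (k < m)%nat -> abs_cont_on t (F k)) ->
  abs_cont_on t (fun v => fsum m (fun k => F k v)).
Proof.
  induction m; intros H. exact (ac_const t 0).
  apply (ac_plus t (fun v => fsum m (fun k => F k v)) (F m)).
  apply IHm; intros; apply H; lia. apply H; lia.
Qed.

(* Gluing an absolutely continuous f on [0,s] with g on [0,t], shifted to
   [s, s+t], along g 0 = f s.  The glued function is f (lo u) + g (hi u) - f s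
   with lo, hi monotone and 1-Lipschitz. *)
Section Glue.
Variables (s t : R) (f g : R -> R).
Hypothesis Hs : 0 <= s.
Hypothesis Ht : 0 <= t.

Let lo u := if Rle_dec u s then u else s.
Let hi u := if Rle_dec u s then 0 else u - s.

Lemma ac_glue : abs_cont_on s f -> abs_cont_on t g -> g 0 = f s ->
  abs_cont_on (s + t) (fun u => if Rle_dec u s then f u else g (u - s)).
Proof.
  intros Hf Hg Hfg e He. destruct (Hf (e / 2)) as [d1 [Hd1 H1]]. lra.
  destruct (Hg (e / 2)) as [d2 [Hd2 H2]]. lra.
  assert (lo_mono : forall u v, u <= v -> lo u <= lo v /\ lo v - lo u <= v - u)
    by (intros u v H; unfold lo; destruct (Rle_dec u s); destruct (Rle_dec v s); lra).
  assert (hi_mono : forall u v, u <= v -> hi u <= hi v /\ hi v - hi u <= v - u)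
    by (intros u v H; unfold hi; destruct (Rle_dec u s); destruct (Rle_dec v s); lra).
  exists (Rmin d1 d2). split. apply Rmin_glb_lt; auto. intros m a b Ha Hb Hsum.
  pose proof (Rmin_l d1 d2). pose proof (Rmin_r d1 d2).
  assert (Hh : forall u, (if Rle_dec u s then f u else g (u - s)) = f (lo u) + g (hi u) - f s).
  { intros u. unfold lo, hi. destruct (Rle_dec u s). rewrite Hfg. ring. ring. }
  assert (Slo : fsum m (fun k => lo (b k) - lo (a k)) <= fsum m (fun k => b k - a k)).
  { apply fsum_le; intros k Hk. apply lo_mono. apply (Ha k Hk). }
  assert (Shi : fsum m (fun k => hi (b k) - hi (a k)) <= fsum m (fun k => b k - a k)).
  { apply fsum_le; intros k Hk. apply hi_mono. apply (Ha k Hk). }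
  assert (A1 : fsum m (fun k => Rabs (f (lo (b k)) - f (lo (a k)))) < e / 2).
  { apply (H1 m (fun k => lo (a k)) (fun k => lo (b k))); [| | lra].
    - intros k Hk. destruct (Ha k Hk) as [[Ha1 Ha2] Hb1]. pose proof (lo_mono _ _ Ha2).
      unfold lo in *; destruct (Rle_dec (a k) s); destruct (Rle_dec (b k) s); lra.
    - intros k Hk. apply lo_mono. apply Hb; auto. }
  assert (A2 : fsum m (fun k => Rabs (g (hi (b k)) - g (hi (a k)))) < e / 2).
  { apply (H2 m (fun k => hi (a k)) (fun k => hi (b k))); [| | lra].
    - intros k Hk. destruct (Ha k Hk) as [[Ha1 Ha2] Hb1]. pose proof (hi_mono _ _ Ha2).
      unfold hi in *; destruct (Rle_dec (a k) s); destruct (Rle_dec (b k) s); lra.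
    - intros k Hk. apply hi_mono. apply Hb; auto. }
  eapply Rle_lt_trans.
  - apply (fsum_le _ _ (fun k => Rabs (f (lo (b k)) - f (lo (a k))) + Rabs (g (hi (b k)) - g (hi (a k))))).
    intros k _. rewrite !Hh.
    replace (f (lo (b k)) + g (hi (b k)) - f s - (f (lo (a k)) + g (hi (a k)) - f s))
      with ((f (lo (b k)) - f (lo (a k))) + (g (hi (b k)) - g (hi (a k)))) by ring.
    apply Rabs_triang.
  - rewrite fsum_plus. lra.
Qed.

End Glue.

Lemma dlim_local f g x l : derivable_pt_lim f x l ->
  (exists d, 0 < d /\ forall y, Rabs (y - x) < d -> f y = g y) -> derivable_pt_lim g x l.
Proof.
  intros Hf [d [Hd Hfg]] e He. destruct (Hf e He) as [dl Hdl].
  assert (Hm : 0 < Rmin dl d) by (apply Rmin_glb_lt; auto; apply cond_pos).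
  exists (mkposreal _ Hm). intros h Hh Hh2. simpl in Hh2.
  pose proof (Rmin_l dl d). pose proof (Rmin_r dl d).
  rewrite <- (Hfg (x + h)), <- (Hfg x).
  - apply Hdl; auto. lra.
  - rewrite Rminus_diag, Rabs_R0; auto.
  - replace (x + h - x) with h by ring. lra.
Qed.

Lemma dlim_shift f s u l : derivable_pt_lim f (u - s) l -> derivable_pt_lim (fun v => f (v - s)) u l.
Proof.
  intros H e He. destruct (H e He) as [d Hd]. exists d. intros h Hh Hh2.
  replace (u + h - s) with (u - s + h) by ring. apply Hd; auto.
Qed.

Lemma dlim_mulc f u l c : derivable_pt_lim f u l -> derivable_pt_lim (fun v => f v * c) u (l * c).
Proof.
  intros H. pose proof (derivable_pt_lim_scal f c u l H).
  replace (fun v => f v * c) with (mult_real_fct c f).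
  - replace (l * c) with (c * l) by ring. auto.
  - apply functional_extensionality. intros; unfold mult_real_fct; ring.
Qed.

Lemma dlim_fsum m (F : nat -> R -> R) u (l : nat -> R) :
  (forall k, (k < m)%nat -> derivable_pt_lim (F k) u (l k)) ->
  derivable_pt_lim (fun v => fsum m (fun k => F k v)) u (fsum m l).
Proof.
  induction m; intros H. simpl. exact (derivable_pt_lim_const 0 u).
  simpl. apply (derivable_pt_lim_plus (fun v => fsum m (fun k => F k v)) (F m)).
  apply IHm; intros; apply H; lia. apply H; lia.
Qed.

Definition concat {A : Type} (s : R) (f g : R -> A) : R -> A :=
  fun u => if Rle_dec u s then f u else g (u - s).

Lemma measurable_concat n s t sg1 sg2 : 0 <= s -> 0 <= t ->
  measurable_on n s sg1 -> measurable_on n t sg2 -> measurable_on n (t + s) (concat s sg1 sg2).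
Proof.
  intros Hs Ht Hm1 Hm2 i j c Hi Hj. unfold concat.
  apply (meas_ext (fun u => (0 <= u <= s /\ sg1 u i j < c) \/
                            ((0 <= u - s <= t /\ sg2 (u - s) i j < c) /\ ~ (u = s)))).
  - intros u. destruct (Rle_dec u s); split.
    + intros [H | [[H1 H2] H3]]; [split; [lra | tauto] | lra].
    + intros [H1 H2]. left. split; [lra | auto].
    + intros [H | [[H1 H2] H3]]; [lra | split; [lra | auto]].
    + intros [H1 H2]. right. split; [split; [lra | auto] | lra].
  - apply meas_union. apply Hm1; auto. apply meas_inter.
    + apply (meas_shift (fun v => 0 <= v <= t /\ sg2 v i j < c)). apply Hm2; auto.
    + apply meas_compl, meas_null, outer_point.
Qed.

Lemma deriv_concat n s sg1 sg2 P1 P2 u i j : (i < n)%nat -> (j < n)%nat -> u <> s ->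
  (u < s -> derivable_pt_lim (fun v => P1 v i j) u (mmul n (sg1 u) (P1 u) i j)) ->
  (s < u -> forall k, (k < n)%nat ->
     derivable_pt_lim (fun v => P2 v i k) (u - s) (mmul n (sg2 (u - s)) (P2 (u - s)) i k)) ->
  derivable_pt_lim (fun v => concat s P1 (fun w => mmul n (P2 w) (P1 s)) v i j) u
    (mmul n (concat s sg1 sg2 u) (concat s P1 (fun w => mmul n (P2 w) (P1 s)) u) i j).
Proof.
  intros Hi Hj Hus Hd1 Hd2. unfold concat.
  destruct (Rtotal_order u s) as [Hlt | [Heq | Hgt]]; [| contradiction |].
  - destruct (Rle_dec u s); [| lra].
    apply (dlim_local (fun v => P1 v i j)). apply Hd1; auto.
    exists (s - u). split. lra. intros y Hy. destruct (Rle_dec y s); auto. apply Rabs_def2 in Hy. lra.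
  - destruct (Rle_dec u s); [lra |].
    apply (dlim_local (fun v => fsum n (fun k => P2 (v - s) i k * P1 s k j))).
    2:{ exists (u - s). split. lra. intros y Hy. apply Rabs_def2 in Hy. destruct (Rle_dec y s); [lra |].
        unfold mmul. destruct (Nat.ltb_spec i n); destruct (Nat.ltb_spec j n); try lia. auto. }
    replace (mmul n (sg2 (u - s)) (mmul n (P2 (u - s)) (P1 s)) i j) with
      (fsum n (fun k => mmul n (sg2 (u - s)) (P2 (u - s)) i k * P1 s k j)).
    + apply (dlim_fsum n (fun k v => P2 (v - s) i k * P1 s k j) u). intros k Hk.
      apply dlim_mulc. apply (dlim_shift (fun v => P2 v i k)). apply Hd2; auto.
    + rewrite <- mmul_assoc. unfold mmul at 2.
      destruct (Nat.ltb_spec i n); destruct (Nat.ltb_spec j n); try lia. auto.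
Qed.

(* Products of elements of the continuous semigroup: B in S_s followed by
   D in S_t is the solution at time t + s of the concatenated control. *)
Lemma cont_S_mul n M t s D B : 0 <= t -> 0 <= s -> cont_S n M t D -> cont_S n M s B ->
  cont_S n M (t + s) (mmul n D B).
Proof.
  intros Ht Hs HD HB.
  destruct HD as (sg2 & P2 & HM2 & Hm2 & HP2 & H02 & Hac2 & (N2 & HN2 & Hd2) & ->).
  destruct HB as (sg1 & P1 & HM1 & Hm1 & HP1 & H01 & Hac1 & (N1 & HN1 & Hd1) & ->).
  exists (concat s sg1 sg2), (concat s P1 (fun w => mmul n (P2 w) (P1 s))).
  split; [| split; [| split; [| split; [| split; [| split]]]]].
  - intros u Hu. unfold concat. destruct (Rle_dec u s). apply HM1; lra. apply HM2; lra.
  - apply measurable_concat; auto.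
  - intros u. unfold concat. destruct (Rle_dec u s). auto. apply mmul_isMat.
  - unfold concat. destruct (Rle_dec 0 s); [auto | lra].
  - intros i j Hi Hj. rewrite Rplus_comm.
    replace (fun v => concat s P1 (fun w => mmul n (P2 w) (P1 s)) v i j)
      with (fun u => if Rle_dec u s then P1 u i j else mmul n (P2 (u - s)) (P1 s) i j)
      by (apply functional_extensionality; intro u; unfold concat; destruct (Rle_dec u s); auto).
    apply (ac_glue s t (fun u => P1 u i j) (fun v => mmul n (P2 v) (P1 s) i j) Hs Ht); auto.
    + replace (fun v => mmul n (P2 v) (P1 s) i j) with (fun v => fsum n (fun k => P2 v i k * P1 s k j)).
      * apply (ac_fsum t n (fun k v => P2 v i k * P1 s k j)). intros k Hk. apply ac_mulc, Hac2; auto.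
      * apply functional_extensionality. intros v. unfold mmul.
        destruct (Nat.ltb_spec i n); destruct (Nat.ltb_spec j n); try lia. auto.
    + rewrite H02, mid_l; auto.
  - exists (fun u => N1 u \/ N2 (u - s) \/ u = s). split.
    + apply null_union; auto. apply null_union. apply (outer_shift N2); auto. apply outer_point.
    + intros u Hu HnN i j Hi Hj. apply deriv_concat; auto.
      * intros Hlt. apply Hd1; auto. lra.
      * intros Hgt k Hk. apply Hd2; auto. lra.
  - unfold concat. destruct (Rle_dec (t + s) s).
    + assert (t = 0) by lra. subst. rewrite H02, mid_l; auto. rewrite Rplus_0_l. auto.
    + replace (t + s - s) with t by ring. auto.
Qed.

Lemma cont_closed n M (Tm : R -> Prop) (S : R -> Mat -> Prop) :
  (forall t, Tm t <-> 0 <= t) -> (forall t B, S t B <-> 0 <= t /\ cont_S n M t B) ->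
  approx_closed n Tm S.
Proof.
  intros HT HS. apply approx_closed_of_closed. intros t s D B Ht Hs HD HB.
  apply HT in Ht, Hs. apply HS in HD, HB. split.
  - apply HT. lra.
  - apply HS. split. lra. apply cont_S_mul; tauto.
Qed.

Theorem mainTheorem6 (n : nat) (K : Vec -> Prop) (Tm : R -> Prop) (S : R -> Mat -> Prop) :
  proper_cone n K ->
  generated_semigroup n Tm S ->
  (forall t B, Tm t -> S t B -> in_pi n K B) ->
  K_irreducible_sg n K Tm S ->
  jsr_eq n Tm S 1 ->
  sg_bounded n Tm S.
Proof.
  intros HK Hgen Hpi Hirr Hjsr.
  destruct Hgen as [(M & _ & HT & HS) | [(M & _ & HT & HS) | (M & _ & _ & HT & HS)]].
  - destruct (nat_times Tm HT) as [Hnn Hunb].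
    apply (bounded_of_closed_semigroup n K); eauto using disc_closed.
  - destruct (halfline_times Tm HT) as [Hnn Hunb].
    apply (bounded_of_closed_semigroup n K); eauto using cont_closed.
  - destruct (halfline_times Tm HT) as [Hnn Hunb].
    apply (bounded_of_closed_semigroup n K); eauto using jump_closed.
Qed.
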